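(* Let $S$ be a strongly $E^*$-unitary inverse semigroup (with zero) and $R$ a commutative unital ring. Then $L_R(S)\cong A_R(\mathcal G_{\mathrm{tight}}(S))$, where $\mathcal G_{\mathrm{tight}}(S)$ is Exel's groupoid of tight representations (tight groupoid) of $S$ and $A_R$ denotes the Steinberg algebra over $R$.
   Context: $S$ is an inverse semigroup with zero, $s^*$ the unique inverse of $s$, $E$ its idempotents (a meet semilattice with $x\wedge y=xy$, least element $0$), $S^\times=S\setminus\{0\}$, $E^\times=E\setminus\{0\}$. A pure grading is a map $\varphi:S^\times\to G$ to a group with $\varphi(ab)=\varphi(a)\varphi(b)$ whenever $ab\ne0$ and $\varphi^{-1}(1_G)=E^\times$; $S$ is strongly $E^*$-unitary if it has one. For $g\in G$, $E_g=\{x\in E: x\le ss^*$ for some $s$ with $\varphi(s)=g\}$ if $\varphi^{-1}(g)\ne\emptyset$, else $\{0\}$. $\phi_g:E_{g^{-1}}\to E_g$, $x\mapsto sxs^*$ (any $s$ with $\varphi(s)=g$, $x\le s^*s$) is a meet-semilattice isomorphism. For a meet semilattice $P$ with $0$: a filter is a subset $F$, $\emptyset\ne F\ne P$, closed upwards and under meets; $F(P)$ has topology generated by $\{F:x\in F\}$; tight filters $T(P)$ are the closure of the ultrafilters; $V^P_{(x:x_1,\dots,x_n)}=\{\xi\in T(P):x\in\xi, x_i\notin\xi\}$; $\mathcal T_c(P)$ is the generalized Boolean algebra of compact open subsets of $T(P)$. $\mathcal T_c(E_g)$ is identified with the ideal of $\mathcal T_c(E)$ of compact open sets contained in $\bigcup_{x\in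 E_g}V^E_x$, and $\hat\phi_g:\mathcal T_c(E_{g^{-1}})\to\mathcal T_c(E_g)$ is the isomorphism induced by $\phi_g$ ($V_{(x:x_1,\dots,x_n)}\mapsto V_{(\phi_g(x):\phi_g(x_1),\dots,\phi_g(x_n))}$). $\Phi=(\{\mathcal T_c(E_g)\},\{\hat\phi_g\})$ is a partial action of $G$ on $\mathcal T_c(E)$. For a partial action $\Phi=(\{\mathcal I_t\},\{\phi_t\})$ on a generalized Boolean algebra $\mathcal B$ and commutative unital ring $R$: $\mathrm{Lc}(R,\mathcal B)$ is the $R$-algebra of functions $f:R\setminus\{0\}\to\mathcal B$ with pairwise disjoint values, almost all $0$, viewed as the function $\sum_r r1_{f(r)}$ (equivalently locally constant compactly supported $R$-valued functions on the Stone dual of $\mathcal B$); $\mathrm{Lc}(R,\mathcal B)\rtimes_\Phi G$ consists of finite sums $\sum_t f_t\delta_t$, $f_t\in\mathrm{Lc}(R,\mathcal I_t)$, with $(a\delta_s)(b\delta_t)=\tilde\phi_s(\tilde\phi_{s^{-1}}(a)b)\delta_{st}$, $\tilde\phi_t(f)=\phi_t\circ f$. $L_R(S,\varphi):=\mathrm{Lc}(R,\mathcal T_c(E))\rtimes_\Phi G$; up to isomorphism it does not depend on the pure grading, and is written $L_R(S)$. *)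

From HB Require Import structures.
From mathcomp Require Import all_boot all_algebra.
From Stdlib Require Import ClassicalEpsilon.
From Stdlib Require List.

Set Implicit Arguments.
Unset Strict Implicit.
Unset Printing Implicit Defensive.

Import GRing.Theory.
Local Open Scope ring_scope.

Record invsemigroup := InvSemigroup {
  isg_car :> Type;
  isg_mul : isg_car -> isg_car -> isg_car;
  isg_star : isg_car -> isg_car;
  isg_zero : isg_car;
  isg_mulA : forall a b c, isg_mul a (isg_mul b c) = isg_mul (isg_mul a b) c;
  isg_inv1 : forall s, isg_mul (isg_mul s (isg_star s)) s = s;
  isg_inv2 : forall s, isg_mul (isg_mul (isg_star s) s) (isg_star s) = isg_star s;
  isg_inv_uniq : forall s t, isg_mul (isg_mul s t) s = s ->
                   isg_mul (isg_mul t s) t = t -> t = isg_star s;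
  isg_mul0s : forall s, isg_mul isg_zero s = isg_zero;
  isg_muls0 : forall s, isg_mul s isg_zero = isg_zero }.

Record group := Group {
  grp_car :> Type;
  gmul : grp_car -> grp_car -> grp_car;
  gone : grp_car;
  ginv : grp_car -> grp_car;
  gmulA : forall a b c, gmul a (gmul b c) = gmul (gmul a b) c;
  gmul1l : forall a, gmul gone a = a;
  gmul1r : forall a, gmul a gone = a;
  gmulVl : forall a, gmul (ginv a) a = gone;
  gmulVr : forall a, gmul a (ginv a) = gone }.

(* Finitely supported sums over an arbitrary type (0 if the support is
   not finite; the chosen duplicate-free list covering the support does
   not matter). *)
Definition fsum {T : Type} {V : zmodType} (F : T -> V) : V :=
  match excluded_middle_informative
          (exists l : seq T, List.NoDup l /\ forall x, F x <> 0 -> List.In x l)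
  with
  | left H => \sum_(x <- proj1_sig (constructive_indefinite_description _ H)) F x
  | right _ => 0
  end.

Definition indic {T : Type} {R : pzRingType} (U : T -> Prop) (x : T) : R :=
  if excluded_middle_informative (U x) then 1 else 0.

Section Tight.
Variable S : invsemigroup.

Definition smul := @isg_mul S.
Definition sstar := @isg_star S.
Definition szero := @isg_zero S.

Definition idem (x : S) : Prop := smul x x = x.
Definition leE (x y : S) : Prop := smul x y = x.

(* subsets of E (predicates on S concentrated on E) *)
Definition Filt := S -> Prop.

Definition is_filter (F : Filt) : Prop :=
  (forall x, F x -> idem x) /\
  (exists x, F x) /\
  ~ (forall x, idem x -> F x) /\
  (forall x y, F x -> idem y -> leE x y -> F y) /\
  (forall x y, F x -> F y -> F (smul x y)).

Definition is_ultrafilter (F : Filt) : Prop :=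
  is_filter F /\
  forall F', is_filter F' -> (forall x, F x -> F' x) -> forall x, F' x -> F x.

Definition in_basic (xs ys : seq S) (F : Filt) : Prop :=
  (forall x, List.In x xs -> F x) /\ (forall y, List.In y ys -> ~ F y).

Definition idem_list (l : seq S) : Prop := forall x, List.In x l -> idem x.

(* tight filters = closure of the ultrafilters in F(E) *)
Definition is_tight (F : Filt) : Prop :=
  is_filter F /\
  forall xs ys, idem_list xs -> idem_list ys -> in_basic xs ys F ->
    exists U, is_ultrafilter U /\ in_basic xs ys U.

(* topology of T(E) (subspace topology) *)
Definition tset := Filt -> Prop.

Definition topen (O : tset) : Prop :=
  (forall xi, O xi -> is_tight xi) /\
  forall xi, O xi -> exists xs ys, idem_list xs /\ idem_list ys /\
    in_basic xs ys xi /\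
    forall eta, is_tight eta -> in_basic xs ys eta -> O eta.

Definition tcompact (K : tset) : Prop :=
  forall C : tset -> Prop,
    (forall O, C O -> topen O) ->
    (forall xi, K xi -> exists O, C O /\ O xi) ->
    exists l : seq tset, (forall O, List.In O l -> C O) /\
      forall xi, K xi -> exists O, List.In O l /\ O xi.

Definition Tc (U : tset) : Prop := topen U /\ tcompact U.

Definition isgerm (p : S * Filt) : Prop :=
  is_tight p.2 /\ p.2 (smul (sstar p.1) p.1).

Definition germ_eq (p q : S * Filt) : Prop :=
  p.2 = q.2 /\ exists e, p.2 e /\ smul p.1 e = smul q.1 e.

Definition germ : Type :=
  { P : S * Filt -> Prop |
      exists p, isgerm p /\ P = (fun q => isgerm q /\ germ_eq p q) }.

Definition thetas (s : S) (xi : Filt) : Filt := fun y =>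
  idem y /\ exists x, xi x /\ leE x (smul (sstar s) s) /\
                      leE (smul (smul s x) (sstar s)) y.

Definition gsrc (g : germ) (xi : Filt) : Prop := exists s, sval g (s, xi).
Definition grng (g : germ) (eta : Filt) : Prop :=
  exists s xi, sval g (s, xi) /\ eta = thetas s xi.

Definition gprod (a b c : germ) : Prop :=
  exists s t eta, sval b (t, eta) /\ sval a (s, thetas t eta) /\
                  sval c (smul s t, eta).

Definition Theta (s : S) (U : tset) : germ -> Prop :=
  fun g => exists xi, U xi /\ sval g (s, xi).

Definition gopen (O : germ -> Prop) : Prop :=
  forall g, O g -> exists s U, topen U /\
    (forall xi, U xi -> xi (smul (sstar s) s)) /\
    Theta s U g /\ forall h, Theta s U h -> O h.

Definition gcompact (K : germ -> Prop) : Prop :=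
  forall C : (germ -> Prop) -> Prop,
    (forall O, C O -> gopen O) ->
    (forall g, K g -> exists O, C O /\ O g) ->
    exists l : seq (germ -> Prop), (forall O, List.In O l -> C O) /\
      forall g, K g -> exists O, List.In O l /\ O g.

Definition bisection (B : germ -> Prop) : Prop :=
  forall a b, B a -> B b ->
    ((exists xi, gsrc a xi /\ gsrc b xi) \/ (exists eta, grng a eta /\ grng b eta)) ->
    a = b.

Definition compact_open_bisection (B : germ -> Prop) : Prop :=
  gopen B /\ gcompact B /\ bisection B.

Section Steinberg.
Variable R : comPzRingType.

Definition inSteinberg (f : germ -> R) : Prop :=
  exists l : seq (R * (germ -> Prop)),
    (forall p, List.In p l -> compact_open_bisection p.2) /\
    f = (fun g => \sum_(p <- l) p.1 * indic p.2 g).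

Definition Aadd (f h : germ -> R) : germ -> R := fun g => f g + h g.
Definition Ascale (r : R) (f : germ -> R) : germ -> R := fun g => r * f g.
Definition Aconv (f h : germ -> R) : germ -> R := fun c =>
  fsum (fun p : germ * germ =>
          if excluded_middle_informative (gprod p.1 p.2 c)
          then f p.1 * h p.2 else 0).
End Steinberg.

Section Grading.
Variables (G : group) (phi : S -> G).

Definition pure_grading : Prop :=
  (forall a b, smul a b <> szero -> phi (smul a b) = gmul (phi a) (phi b)) /\
  (forall s, s <> szero -> (phi s = @gone G <-> idem s)).

Definition Eg (g : G) (x : S) : Prop :=
  idem x /\
  ((exists s, s <> szero /\ phi s = g /\ leE x (smul s (sstar s))) \/
   ((forall s, s <> szero -> phi s <> g) /\ x = szero)).

Definition Dg (g : G) (xi : Filt) : Prop := is_tight xi /\ exists x, Eg g x /\ xi x.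

(* T_c(E_g) as an ideal of T_c(E) *)
Definition TcI (g : G) (U : tset) : Prop := Tc U /\ forall xi, U xi -> Dg g xi.

(* the homeomorphism D_{g^-1} -> D_g induced by phi_g : E_{g^-1} -> E_g,
   phi_g(x) = s x s^* for s with phi(s) = g and x <= s^* s *)
Definition theta (g : G) (xi : Filt) : Filt := fun y =>
  idem y /\ exists s x, s <> szero /\ phi s = g /\ xi x /\
     leE x (smul (sstar s) s) /\ leE (smul (smul s x) (sstar s)) y.

Section Skew.
Variable R : comPzRingType.

(* Lc(R, T_c(E_g)), as functions on T(E) (extended by 0) *)
Definition inLc (g : G) (f : Filt -> R) : Prop :=
  exists l : seq (R * tset),
    uniq (map fst l) /\
    (forall p, List.In p l -> p.1 != 0 /\ TcI g p.2) /\
    (forall i j, (i < j < size l)%N ->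
       forall xi, (nth (0, fun _ => False) l i).2 xi ->
                  ~ (nth (0, fun _ => False) l j).2 xi) /\
    f = (fun xi => \sum_(p <- l) p.1 * indic p.2 xi).

Definition act (g : G) (f : Filt -> R) : Filt -> R := fun xi =>
  if excluded_middle_informative (Dg g xi) then f (theta (ginv g) xi) else 0.

(* elements sum_t f_t delta_t of Lc(R,T_c(E)) x|_Phi G *)
Definition inL (a : G -> Filt -> R) : Prop :=
  (exists l : seq G, forall t, ~ List.In t l -> a t = (fun _ => 0)) /\
  forall t, inLc t (a t).

Definition Ladd (a b : G -> Filt -> R) : G -> Filt -> R :=
  fun t xi => a t xi + b t xi.
Definition Lscale (r : R) (a : G -> Filt -> R) : G -> Filt -> R :=
  fun t xi => r * a t xi.
(* (a delta_s)(b delta_t) = tilde phi_s(tilde phi_{s^-1}(a) b) delta_{st} *)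
Definition Lmul (a b : G -> Filt -> R) : G -> Filt -> R := fun u xi =>
  fsum (fun p : G * G =>
          if excluded_middle_informative (gmul p.1 p.2 = u)
          then act p.1 (fun eta => act (ginv p.1) (a p.1) eta * b p.2 eta) xi
          else 0).
End Skew.
End Grading.
End Tight.

From mathcomp Require Import all_boot all_algebra.
From Stdlib Require Import ClassicalEpsilon Classical.
From Stdlib Require Import FunctionalExtensionality PropExtensionality ProofIrrelevance.
From Stdlib Require List Permutation.

Set Implicit Arguments.
Unset Strict Implicit.
Unset Printing Implicit Defensive.

Import GRing.Theory.
Local Open Scope ring_scope.

(* The isomorphism sends a_t delta_t to the function [s, xi] |-> a_(phi s)(theta_s xi) on
   germs.  Everything rests on one consequence of purity: a germ is determined by its grade
   together with its range (or its source), because two elements of the same grade with the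
   same domain idempotent u^*u = v^*v are equal (v u^* has trivial grade, hence is an
   idempotent, and it swaps u and v).  So the germs of grade t are in bijection with the
   tight filters in D_t, G_tight(S) is the groupoid of germs of the partial action of G on
   T(E), compact open bisections of grade t correspond to compact open subsets of D_t, and
   at a germ of grade g the convolution has at most one term of each grade t, which is the
   term of grade t in the skew-product formula. *)

Lemma pred_ext (T : Type) (P Q : T -> Prop) : (forall x, P x <-> Q x) -> P = Q.
Proof. move=> h; apply functional_extensionality => x; apply propositional_extensionality; exact: h. Qed.

Definition asbool {T : Type} (P : T -> Prop) (x : T) : bool :=
  if excluded_middle_informative (P x) then true else false.

Lemma asboolP {T : Type} (P : T -> Prop) x : asbool P x <-> P x.
Proof. rewrite /asbool; case: excluded_middle_informative => //. Qed.

Lemma In_mem (T : eqType) (x : T) (s : seq T) : List.In x s <-> x \in s.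
Proof.
elim: s => [|y s IH] //=; rewrite inE; split.
- by case=> [->|/IH ->]; rewrite ?eqxx ?orbT.
- by case/orP => [/eqP ->|/IH]; [left|right].
Qed.

Lemma In_filter (T : Type) (p : pred T) (x : T) (l : seq T) :
  List.In x (filter p l) <-> List.In x l /\ p x.
Proof.
elim: l => [|y l IH] /=; first by split => [|[]].
case hp: (p y) => /=.
- rewrite IH; split.
  + by case=> [<-|[h1 h2]]; [split; [left|] | split; [right|]].
  + by case=> [[<-|h] h2]; [left | right].
- rewrite IH; split.
  + by case=> h1 h2; split; [right|].
  + by case=> [[<-|h] h2]; [rewrite hp in h2 | ].
Qed.

Lemma In_pmap (A B : Type) (f : A -> option B) (l : seq A) q :
  List.In q (pmap f l) <-> exists x, List.In x l /\ f x = Some q.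
Proof.
elim: l => [|x l IH] /=; first by split => // [[? []]].
case E: (f x) => [y|] /=.
- rewrite IH; split.
  + by case=> [<-|[x' [h1 h2]]]; [exists x; split; [left|] | exists x'; split; [right|]].
  + case=> x' [[<-|h1] h2]; first by left; rewrite E in h2; case: h2.
    by right; exists x'.
- rewrite IH; split.
  + by case=> x' [h1 h2]; exists x'; split; [right|].
  + case=> x' [[<-|h1] h2]; first by rewrite E in h2.
    by exists x'.
Qed.

Lemma lift_list (A B : Type) (P : A -> Prop) (f : A -> B) (l : seq B) :
  (forall b, List.In b l -> exists a, P a /\ b = f a) ->
  exists l' : seq A, (forall a, List.In a l' -> P a) /\ l = map f l'.
Proof.
elim: l => [|b l IH] h; first by exists [::].
have [a [ha ->]] := h b (or_introl erefl).
have [l' [h1 h2]] := IH (fun b' hb' => h b' (or_intror hb')).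
exists (a :: l'); split; last by rewrite h2.
by move=> a' [<-|]; [|apply: h1].
Qed.

Lemma const_cover_values (A B : Type) (f : A -> B) (l : seq (A -> Prop)) :
  (forall O, List.In O l -> exists b, forall x, O x -> f x = b) ->
  exists bs : seq B, forall O x, List.In O l -> O x -> List.In (f x) bs.
Proof.
elim: l => [|O l IH] hl; first by exists [::].
have [bs hbs] := IH (fun O' h => hl O' (or_intror h)).
have [b hb] := hl O (or_introl erefl).
exists (b :: bs) => O' x [<-|hO'] hx; first by left; rewrite hb.
by right; exact: hbs O' x hO' hx.
Qed.

Lemma NoDup_filter (T : Type) (p : pred T) (l : seq T) : List.NoDup l -> List.NoDup (filter p l).
Proof.
elim: l => [|x l IH] /=; first by constructor.
move=> /List.NoDup_cons_iff [hx hl]; case: (p x); last exact: IH.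
constructor; last exact: IH.
by move/In_filter => [].
Qed.

Lemma NoDup_map_inj (A B : Type) (f : A -> B) (l : seq A) :
  (forall x y, f x = f y -> x = y) -> List.NoDup l -> List.NoDup (map f l).
Proof.
move=> hf; elim: l => [|x l IH] /=; first by constructor.
move=> /List.NoDup_cons_iff [hx hl]; constructor; last exact: IH.
by move/List.in_map_iff => [y [e hy]]; apply: hx; rewrite -(hf _ _ e).
Qed.

Lemma NoDup_pmap (A B : Type) (f : A -> option B) (l : seq A) :
  List.NoDup l -> (forall x y q, List.In x l -> List.In y l -> f x = Some q -> f y = Some q -> x = y) ->
  List.NoDup (pmap f l).
Proof.
elim: l => [|x l IH] /=; first by constructor.
move=> /List.NoDup_cons_iff [hx hl] h.
have IH' := IH hl (fun x' y' q h1 h2 => h x' y' q (or_intror h1) (or_intror h2)).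
case E: (f x) => [y|] //=.
constructor => //.
move/In_pmap => [x' [h1 h2]].
have e : x = x' by apply: (h x x' y); [left | right | |].
by apply: hx; rewrite e.
Qed.

Lemma NoDup_exists (T : Type) (l : seq T) : exists l', List.NoDup l' /\ forall x, List.In x l <-> List.In x l'.
Proof.
elim: l => [|x l [l' [n h]]]; first by exists [::]; split => //; constructor.
case: (classic (List.In x l')) => hx.
- exists l'; split => // y; split; first by case=> [<-|/h]. by move/h => ?; right.
- exists (x :: l'); split; first by constructor.
  move=> y; split; by case=> [<-|/h ?]; [left|right].
Qed.

Lemma indic1 (T : Type) (R : pzRingType) (U : T -> Prop) x : U x -> indic U x = 1 :> R.
Proof. by rewrite /indic; case: excluded_middle_informative. Qed.

Lemma indic0 (T : Type) (R : pzRingType) (U : T -> Prop) x : ~ U x -> indic U x = 0 :> R.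
Proof. by rewrite /indic; case: excluded_middle_informative. Qed.

Lemma indic_ext (T1 T2 : Type) (R : pzRingType) (P : T1 -> Prop) (Q : T2 -> Prop) x y :
  (P x <-> Q y) -> indic P x = indic Q y :> R.
Proof.
move=> h; case: (classic (P x)) => hx.
- by rewrite !indic1 //; apply/h.
- by rewrite !indic0 // => /h.
Qed.

Section FiniteSums.
Variable V : zmodType.

Lemma sum_perm (T : Type) (F : T -> V) (l1 l2 : seq T) : Permutation.Permutation l1 l2 ->
  \sum_(x <- l1) F x = \sum_(x <- l2) F x.
Proof.
elim=> [|x l l' _ IH|x y l|l l' l'' _ IH1 _ IH2].
- by [].
- by rewrite !big_cons IH.
- by rewrite !big_cons addrCA.
- by rewrite IH1 IH2.
Qed.

Lemma sum_support (T : Type) (F : T -> V) (l : seq T) :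
  \sum_(x <- l) F x = \sum_(x <- filter (fun x => F x != 0) l) F x.
Proof.
rewrite big_filter [RHS]big_mkcond /=; apply: eq_bigr => x _.
by case: (eqVneq (F x) 0) => [->|].
Qed.

Lemma sum_lists_eq (T : Type) (F : T -> V) (l1 l2 : seq T) :
  List.NoDup l1 -> List.NoDup l2 ->
  (forall x, F x <> 0 -> List.In x l1) -> (forall x, F x <> 0 -> List.In x l2) ->
  \sum_(x <- l1) F x = \sum_(x <- l2) F x.
Proof.
move=> n1 n2 c1 c2; rewrite (sum_support _ l1) (sum_support _ l2).
apply: sum_perm; apply: Permutation.NoDup_Permutation; try exact: NoDup_filter.
move=> x; rewrite !In_filter; split; case=> _ /eqP h; (split; [first [exact: c2 | exact: c1] | by apply/eqP]).
Qed.

Lemma fsumE (T : Type) (F : T -> V) (l : seq T) :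
  List.NoDup l -> (forall x, F x <> 0 -> List.In x l) -> fsum F = \sum_(x <- l) F x.
Proof.
move=> n c; rewrite /fsum; case: excluded_middle_informative => [H|H].
- case: constructive_indefinite_description => l0 [n0 c0] /=.
  exact: sum_lists_eq.
- by case: H; exists l.
Qed.

Lemma sum_pmap (A B : Type) (f : A -> option B) (F : B -> V) (l : seq A) :
  \sum_(q <- pmap f l) F q = \sum_(x <- l) (match f x with Some q => F q | None => 0 end).
Proof.
elim: l => [|x l IH] /=; first by rewrite !big_nil.
rewrite big_cons; case: (f x) => [y|] /=; by rewrite ?big_cons IH ?add0r.
Qed.

Lemma sum_pick (T : eqType) (s : seq T) (t0 : T) (c : V) : uniq s ->
  \sum_(t <- s) (if t == t0 then c else 0) = if t0 \in s then c else 0.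
Proof.
elim: s => [|x s IH] /=; first by rewrite big_nil.
move=> /andP [hx hu]; rewrite big_cons IH // inE.
case: (eqVneq x t0) => [<-|ne]; first by rewrite (negPf hx) addr0.
by rewrite add0r.
Qed.

Lemma sum_pick_em (T : Type) (X : T -> V) (c : T) (l : seq T) : List.NoDup l ->
  \sum_(t <- l) (if excluded_middle_informative (c = t) then X t else 0) =
  if excluded_middle_informative (List.In c l) then X c else 0.
Proof.
elim: l => [|x l IH] /=; first by rewrite big_nil; case: excluded_middle_informative => // [[]].
move=> /List.NoDup_cons_iff [hx hl]; rewrite big_cons IH //.
destruct (excluded_middle_informative (c = x)) as [e|ne].
- subst x.
  destruct (excluded_middle_informative (List.In c l)) as [hc|hc]; first by case: hx.
  destruct (excluded_middle_informative (c = c \/ List.In c l)) as [hh|hc']; last by case: hc'; left.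
  by rewrite addr0.
- rewrite add0r.
  destruct (excluded_middle_informative (List.In c l)) as [hc|hc];
  destruct (excluded_middle_informative (x = c \/ List.In c l)) as [hc'|hc'] => //.
  + by case: hc'; right.
  + by case: hc' => // e; case: ne.
Qed.
End FiniteSums.

Section Groups.
Variable G : group.
Local Notation "a *g b" := (@gmul G a b) (at level 40, left associativity).
Local Notation inv := (@ginv G).

Lemma gmulKl (a b : G) : inv a *g (a *g b) = b. Proof. by rewrite gmulA gmulVl gmul1l. Qed.

Lemma gmulKr (a b : G) : a *g (inv a *g b) = b. Proof. by rewrite gmulA gmulVr gmul1l. Qed.

Lemma ginv_uniq (a b : G) : a *g b = gone G -> a = inv b.
Proof. move=> h. by rewrite -(gmul1r a) -(gmulVr b) gmulA h gmul1l. Qed.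

Lemma ginvK (a : G) : inv (inv a) = a.
Proof. symmetry; apply: ginv_uniq; exact: gmulVr. Qed.

Lemma gmul_cancl (a b c : G) : a *g b = a *g c -> b = c.
Proof. move=> h. by rewrite -(gmulKl a b) h gmulKl. Qed.
End Groups.

Section TightGroupoid.
Variable S : invsemigroup.
Local Notation "a ** b" := (@smul S a b) (at level 40, left associativity).
Local Notation "s ^*" := (@sstar S s).
Local Notation z := (@szero S).

(** * Inverse semigroups *)

Lemma smulA (a b c : S) : a ** (b ** c) = a ** b ** c.
Proof. exact: isg_mulA. Qed.

Lemma smul_star_mul (s : S) : s ** s^* ** s = s. Proof. exact: isg_inv1. Qed.

Lemma star_mul_star (s : S) : s^* ** s ** s^* = s^*. Proof. exact: isg_inv2. Qed.

Lemma star_uniq (s t : S) : s ** t ** s = s -> t ** s ** t = t -> t = s^*.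
Proof. exact: isg_inv_uniq. Qed.

Lemma smul0s (s : S) : z ** s = z. Proof. exact: isg_mul0s. Qed.

Lemma smuls0 (s : S) : s ** z = z. Proof. exact: isg_muls0. Qed.

Lemma starK (s : S) : s^*^* = s.
Proof. symmetry; apply: star_uniq; [exact: star_mul_star | exact: smul_star_mul]. Qed.

Lemma idem_star (e : S) : idem e -> e^* = e.
Proof. move=> he; symmetry; apply: star_uniq; rewrite /idem in he; rewrite he he //. Qed.

Lemma idemM (e f : S) : idem e -> idem f -> idem (e ** f).
Proof.
rewrite /idem => he hf.
set x := (e ** f)^*.
have hx : f ** x ** e = x.
  apply: star_uniq.
  - have -> : e ** f ** (f ** x ** e) ** (e ** f) = e ** (f ** f) ** x ** (e ** e) ** f.
      by rewrite !smulA.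
    rewrite hf he /x.
    have -> : e ** f ** (e ** f)^* ** e ** f = (e ** f) ** (e ** f)^* ** (e ** f) by rewrite !smulA.
    by rewrite smul_star_mul.
  - have -> : f ** x ** e ** (e ** f) ** (f ** x ** e) = f ** x ** (e ** e) ** (f ** f) ** x ** e.
      by rewrite !smulA.
    rewrite he hf.
    have -> : f ** x ** e ** f ** x ** e = f ** (x ** (e ** f) ** x) ** e by rewrite !smulA.
    by rewrite /x star_mul_star.
have xid : x ** x = x.
  rewrite -{1}hx -{2}hx.
  have -> : f ** x ** e ** (f ** x ** e) = f ** (x ** (e ** f) ** x) ** e by rewrite !smulA.
  by rewrite /x star_mul_star.
by rewrite -(starK (e ** f)) -/x (idem_star xid).
Qed.

Lemma idem_comm (e f : S) : idem e -> idem f -> e ** f = f ** e.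
Proof.
move=> he hf.
have ef := idemM he hf; have fe := idemM hf he.
rewrite /idem in he hf ef fe.
rewrite -{1}(idem_star ef); symmetry; apply: star_uniq.
- have -> : e ** f ** (f ** e) ** (e ** f) = e ** (f ** f) ** (e ** e) ** f by rewrite !smulA.
  by rewrite hf he -smulA ef.
- have -> : f ** e ** (e ** f) ** (f ** e) = f ** (e ** e) ** (f ** f) ** e by rewrite !smulA.
  by rewrite hf he -smulA fe.
Qed.

Lemma star_mul (a b : S) : (a ** b)^* = b^* ** a^*.
Proof.
have h1 : idem (b ** b^*) by rewrite /idem smulA smul_star_mul.
have h2 : idem (a^* ** a) by rewrite /idem smulA star_mul_star.
symmetry; apply: star_uniq.
- have -> : a ** b ** (b^* ** a^*) ** (a ** b) = a ** ((b ** b^*) ** (a^* ** a)) ** b by rewrite !smulA.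
  rewrite (idem_comm h1 h2).
  have -> : a ** (a^* ** a ** (b ** b^*)) ** b = (a ** a^* ** a) ** (b ** b^* ** b) by rewrite !smulA.
  by rewrite !smul_star_mul.
- have -> : b^* ** a^* ** (a ** b) ** (b^* ** a^*) = b^* ** ((a^* ** a) ** (b ** b^*)) ** a^* by rewrite !smulA.
  rewrite -(idem_comm h1 h2).
  have -> : b^* ** (b ** b^* ** (a^* ** a)) ** a^* = (b^* ** b ** b^*) ** (a^* ** a ** a^*) by rewrite !smulA.
  by rewrite !star_mul_star.
Qed.

Lemma idem_mul_star (s : S) : idem (s ** s^*). Proof. by rewrite /idem smulA smul_star_mul. Qed.

Lemma idem_star_mul (s : S) : idem (s^* ** s). Proof. by rewrite /idem smulA star_mul_star. Qed.

Lemma idem_zero : idem z. Proof. by rewrite /idem smul0s. Qed.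

Lemma idem_conj (s e : S) : idem e -> idem (s ** e ** s^*).
Proof.
move=> he; rewrite /idem.
have -> : s ** e ** s^* ** (s ** e ** s^*) = s ** (e ** (s^* ** s)) ** e ** s^* by rewrite !smulA.
rewrite (idem_comm he (idem_star_mul s)).
have -> : s ** (s^* ** s ** e) ** e ** s^* = s ** s^* ** s ** (e ** e) ** s^* by rewrite !smulA.
by rewrite smul_star_mul he.
Qed.

Lemma leE_mull (x y : S) : idem x -> idem y -> leE (x ** y) y.
Proof. rewrite /leE => hx hy. by rewrite -smulA hy. Qed.

Lemma leE_mulr (x y : S) : idem x -> idem y -> leE (x ** y) x.
Proof. move=> hx hy; rewrite (idem_comm hx hy); exact: leE_mull. Qed.

Lemma leE0 (x : S) : leE z x. Proof. by rewrite /leE smul0s. Qed.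

Lemma star_mul_neq0 s : s <> z -> s^* ** s <> z.
Proof. move=> hs e; apply: hs; by rewrite -(smul_star_mul s) -smulA e smuls0. Qed.

Lemma mul_star_neq0 s : s <> z -> s ** s^* <> z.
Proof. move=> hs e; apply: hs; by rewrite -(smul_star_mul s) e smul0s. Qed.

Lemma star_neq0 s : s <> z -> s^* <> z.
Proof. move=> hs e; apply: (star_mul_neq0 hs); by rewrite e smul0s. Qed.

Lemma star_mul_restrict (s e : S) : idem e -> leE e (s^* ** s) -> (s ** e)^* ** (s ** e) = e.
Proof.
move=> he hle; rewrite star_mul (idem_star he).
by rewrite !smulA -(smulA e) hle he.
Qed.

(** * Filters and the maps theta_s *)

Lemma filter_idem (F : Filt S) x : is_filter F -> F x -> idem x.
Proof. by move=> [h _] /h. Qed.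

Lemma filter_up (F : Filt S) x y : is_filter F -> F x -> idem y -> leE x y -> F y.
Proof. by case=> _ [_ [_ [h _]]]; apply: h. Qed.

Lemma filter_meet (F : Filt S) x y : is_filter F -> F x -> F y -> F (x ** y).
Proof. by case=> _ [_ [_ [_ h]]]; apply: h. Qed.

Lemma filter_zeroN (F : Filt S) : is_filter F -> ~ F z.
Proof.
move=> hF h0; case: (hF) => _ [_ [hn _]]; apply: hn => x hx.
by apply: (filter_up hF h0 hx); apply: leE0.
Qed.

Lemma filter_neq0 (F : Filt S) x : is_filter F -> F x -> x <> z.
Proof. by move=> hF hx e; apply: (filter_zeroN hF); rewrite -e. Qed.

Lemma filter_sandwich (F : Filt S) e w : is_filter F -> F e -> idem w -> (F w <-> F (e ** w ** e)).
Proof.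
move=> hF he hw; have hei := filter_idem hF he.
rewrite (idem_comm hei hw) -smulA hei; split.
- by move=> h; apply: filter_meet.
- by move=> h; apply: (filter_up hF h hw); apply: leE_mulr.
Qed.

Lemma filter_neq (xi eta : Filt S) : is_filter xi -> is_filter eta -> xi <> eta ->
  exists x, idem x /\ ((xi x /\ ~ eta x) \/ (~ xi x /\ eta x)).
Proof.
move=> h1 h2 hne; apply: NNPP => hn; apply: hne; apply: pred_ext => x.
split => hx.
- apply: NNPP => hy; apply: hn; exists x; split; [exact: filter_idem h1 hx | by left].
- apply: NNPP => hy; apply: hn; exists x; split; [exact: filter_idem h2 hx | by right].
Qed.

Definition sconj (s y : S) := s^* ** y ** s.

Lemma idem_sconj s y : idem y -> idem (sconj s y).
Proof. move=> hy; rewrite /sconj -{2}(starK s); exact: idem_conj. Qed.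

Lemma sconj_le s x y : idem x -> idem y -> leE x y -> leE (sconj s x) (sconj s y).
Proof.
rewrite /sconj /leE => hx hy hxy.
have hc : idem (s ** s^*) by apply: idem_mul_star.
have -> : s^* ** x ** s ** (s^* ** y ** s) = s^* ** (x ** (s ** s^*)) ** y ** s by rewrite !smulA.
rewrite (idem_comm hx hc).
have -> : s^* ** (s ** s^* ** x) ** y ** s = (s^* ** s ** s^*) ** (x ** y) ** s by rewrite !smulA.
by rewrite star_mul_star hxy.
Qed.

Lemma sconj_meet s x y : idem x -> idem y -> sconj s (x ** y) = sconj s x ** sconj s y.
Proof.
rewrite /sconj => hx hy.
have hc : idem (s ** s^*) by apply: idem_mul_star.
have -> : s^* ** x ** s ** (s^* ** y ** s) = s^* ** (x ** (s ** s^*)) ** y ** s by rewrite !smulA.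
rewrite (idem_comm hx hc).
have -> : s^* ** (s ** s^* ** x) ** y ** s = (s^* ** s ** s^*) ** (x ** y) ** s by rewrite !smulA.
by rewrite star_mul_star !smulA.
Qed.

Lemma idem_sandwich (e y : S) : idem e -> idem y -> e ** y ** e = y ** e.
Proof. move=> he hy. by rewrite (idem_comm he hy) -smulA he. Qed.

Lemma thetasP (s : S) (xi : Filt S) y : is_filter xi -> xi (s^* ** s) ->
  thetas s xi y <-> idem y /\ xi (sconj s y).
Proof.
move=> hF hs; split.
- case=> hy [x [hx [hxs hxy]]]; split => //.
  have hxi := filter_idem hF hx.
  apply: (filter_up hF hx); first exact: idem_sconj.
  rewrite /leE /sconj.
  have hL : idem (s^* ** s) by apply: idem_star_mul.
  rewrite /leE in hxs hxy.
  have e1 : x = s^* ** s ** x by rewrite (idem_comm hL hxi).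
  rewrite {1}e1.
  have -> : s^* ** s ** x ** (s^* ** y ** s) = s^* ** (s ** x ** s^* ** y) ** s by rewrite !smulA.
  rewrite hxy.
  have -> : s^* ** (s ** x ** s^*) ** s = (s^* ** s) ** x ** (s^* ** s) by rewrite !smulA.
  by rewrite idem_sandwich.
- case=> hy hc; split => //.
  exists (sconj s y); split => //; split.
  + rewrite /leE /sconj.
    have -> : s^* ** y ** s ** (s^* ** s) = s^* ** y ** (s ** s^* ** s) by rewrite !smulA.
    by rewrite smul_star_mul.
  + rewrite /leE /sconj.
    have hR : idem (s ** s^*) by apply: idem_mul_star.
    have -> : s ** (s^* ** y ** s) ** s^* = (s ** s^*) ** y ** (s ** s^*) by rewrite !smulA.
    rewrite idem_sandwich //. by rewrite -smulA (idem_comm hR hy) smulA hy.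
Qed.

Lemma thetas_filter (s : S) (xi : Filt S) : is_filter xi -> xi (s^* ** s) ->
  is_filter (thetas s xi).
Proof.
move=> hF hs; split; [|split; [|split; [|split]]].
- by move=> x [].
- exists (s ** s^*); apply/thetasP => //; split; first exact: idem_mul_star.
  by rewrite /sconj smulA star_mul_star.
- move=> h; have := h z idem_zero; move/(thetasP _ hF hs)=> [_].
  by rewrite /sconj smuls0 smul0s; apply: filter_zeroN.
- move=> x y /(thetasP _ hF hs) [hx hcx] hy hxy; apply/thetasP => //; split => //.
  by apply: (filter_up hF hcx); [apply: idem_sconj | apply: sconj_le].
- move=> x y /(thetasP _ hF hs) [hx hcx] /(thetasP _ hF hs) [hy hcy]; apply/thetasP => //.
  split; first exact: idemM.
  by rewrite sconj_meet //; apply: filter_meet.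
Qed.

Lemma thetas_mul_star (s : S) (xi : Filt S) : is_filter xi -> xi (s^* ** s) ->
  thetas s xi (s ** s^*).
Proof.
move=> hF hs; apply/thetasP => //; split; first exact: idem_mul_star.
by rewrite /sconj smulA star_mul_star.
Qed.

Lemma thetasK (s : S) (xi : Filt S) : is_filter xi -> xi (s^* ** s) ->
  thetas (s^*) (thetas s xi) = xi.
Proof.
move=> hF hs; apply: pred_ext => y.
have hT := thetas_filter hF hs.
have hs' : thetas s xi (s^*^* ** s^*) by rewrite starK; apply: thetas_mul_star.
rewrite (thetasP _ hT hs') (thetasP _ hF hs).
split.
- case=> hy [_ h]. rewrite /sconj starK in h.
  have h2 : s^* ** (s ** y ** s^*) ** s = s^* ** s ** y ** (s^* ** s) by rewrite !smulA.
  rewrite h2 in h.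
  have hL : idem (s^* ** s) by apply: idem_star_mul.
  have h3 : s^* ** s ** y ** (s^* ** s) = y ** (s^* ** s) by rewrite idem_sandwich.
  rewrite h3 in h.
  apply: (filter_up hF h hy); exact: leE_mulr.
- move=> hy; have hyi := filter_idem hF hy; split => //.
  have hc : idem (sconj (s^*) y) by apply: idem_sconj.
  split => //.
  rewrite /sconj starK.
  have h2 : s^* ** (s ** y ** s^*) ** s = s^* ** s ** y ** (s^* ** s) by rewrite !smulA.
  rewrite h2.
  have hL : idem (s^* ** s) by apply: idem_star_mul.
  rewrite idem_sandwich //; exact: filter_meet.
Qed.

Lemma thetas_mono (s : S) (F F' : Filt S) : (forall x, F x -> F' x) ->
  forall y, thetas s F y -> thetas s F' y.
Proof. move=> h y [hy [x [hx rest]]]; split => //; exists x; split => //; exact: h. Qed.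

Lemma thetas_mul (s t : S) (eta : Filt S) : is_filter eta -> eta (t^* ** t) ->
  thetas t eta (s^* ** s) -> thetas s (thetas t eta) = thetas (s ** t) eta.
Proof.
move=> hF ht hs.
have hT := thetas_filter hF ht.
have hst : eta ((s ** t)^* ** (s ** t)).
  have /(thetasP _ hF ht) [_] := hs; rewrite /sconj star_mul.
  by have -> : t^* ** s^* ** (s ** t) = t^* ** (s^* ** s) ** t by rewrite !smulA.
apply: pred_ext => y; rewrite (thetasP _ hT hs) (thetasP _ hF hst); split.
- case=> hy /(thetasP _ hF ht) [_ h]; split => //; move: h; rewrite /sconj star_mul.
  by have -> : t^* ** s^* ** y ** (s ** t) = t^* ** (s^* ** y ** s) ** t by rewrite !smulA.
- case=> hy h; split => //; apply/(thetasP _ hF ht); split; first exact: idem_sconj.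
  move: h; rewrite /sconj star_mul.
  by have -> : t^* ** s^* ** y ** (s ** t) = t^* ** (s^* ** y ** s) ** t by rewrite !smulA.
Qed.

Lemma thetas_ultrafilter (s : S) (U : Filt S) : is_ultrafilter U -> U (s^* ** s) ->
  is_ultrafilter (thetas s U).
Proof.
move=> [hF hmax] hs; split; first exact: thetas_filter.
move=> F' hF' hsub x hx.
have hss : F' (s^*^* ** s^*) by rewrite starK; apply: hsub; apply: thetas_mul_star.
have hT' := thetas_filter hF' hss.
have hsub2 : forall y, U y -> thetas (s^*) F' y.
  move=> y hy; rewrite -(thetasK hF hs) in hy.
  by apply: (thetas_mono hsub).
have hback := hmax _ hT' hsub2.
have e := thetasK hF' hss; rewrite starK in e.
by rewrite -e in hx; apply: (thetas_mono _ hx) => y /hback.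
Qed.

Lemma idem_list_sconj (s : S) l : idem_list l -> idem_list (map (sconj s) l).
Proof.
move=> h x /List.in_map_iff [y [<- hy]]; apply: idem_sconj; exact: h.
Qed.

Lemma in_basic_thetas (s : S) (F : Filt S) xs ys : is_filter F -> F (s^* ** s) ->
  idem_list xs -> idem_list ys ->
  (in_basic xs ys (thetas s F) <-> in_basic (map (sconj s) xs) (map (sconj s) ys) F).
Proof.
move=> hF hs hxs hys; split.
- case=> h1 h2; split.
  + move=> x /List.in_map_iff [y [<- hy]].
    by have /(thetasP _ hF hs) [] := h1 _ hy.
  + move=> x /List.in_map_iff [y [<- hy]] hc; apply: (h2 _ hy).
    by apply/(thetasP _ hF hs); split => //; apply: hys.
- case=> h1 h2; split.
  + move=> x hx; apply/(thetasP _ hF hs); split; first exact: hxs.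
    by apply: h1; apply: List.in_map.
  + move=> x hx /(thetasP _ hF hs) [_ hc]; apply: (h2 (sconj s x)) => //.
    exact: List.in_map.
Qed.

Lemma tight_filter (F : Filt S) : is_tight F -> is_filter F.
Proof. by case. Qed.

Lemma thetas_tight (s : S) (xi : Filt S) : is_tight xi -> xi (s^* ** s) ->
  is_tight (thetas s xi).
Proof.
move=> [hF ht] hs; split; first exact: thetas_filter.
move=> xs ys hxs hys hb.
have hb' := (in_basic_thetas hF hs hxs hys).1 hb.
have hxs' : idem_list (s^* ** s :: map (sconj s) xs).
  by move=> x [<-|hx]; [exact: idem_star_mul | exact: idem_list_sconj hxs _ hx].
have hb2 : in_basic (s^* ** s :: map (sconj s) xs) (map (sconj s) ys) xi.
  split; last exact: hb'.2.
  by move=> x [<-|hx]; [exact: hs | exact: hb'.1].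
have [U [hU hUb]] := ht _ _ hxs' (idem_list_sconj (s:=s) hys) hb2.
have hUs : U (s^* ** s) by apply: hUb.1; left.
exists (thetas s U); split; first exact: thetas_ultrafilter.
apply/(in_basic_thetas hU.1 hUs hxs hys); split.
- by move=> x hx; apply: hUb.1; right.
- exact: hUb.2.
Qed.

(** * Germs *)

Lemma germ_eq_refl (p : S * Filt S) : isgerm p -> germ_eq p p.
Proof. case=> ht hs; split => //; by exists (p.1^* ** p.1). Qed.

Lemma germ_eq_sym (p q : S * Filt S) : germ_eq p q -> germ_eq q p.
Proof. case=> e [x [hx hm]]; split => //; exists x; by rewrite -e. Qed.

Lemma germ_eq_trans (p q r : S * Filt S) : isgerm p -> germ_eq p q -> germ_eq q r -> germ_eq p r.
Proof.
move=> [ht _] [e1 [x [hx h1]]] [e2 [y [hy h2]]]; split; first by rewrite e1.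
have hF := tight_filter ht.
have hyp : p.2 y by rewrite e1.
exists (x ** y); split; first exact: filter_meet.
rewrite !smulA h1 -!smulA.
have hxi := filter_idem hF hx; have hyi := filter_idem hF hyp.
by rewrite (idem_comm hxi hyi) !smulA h2 -!smulA (idem_comm hyi hxi).
Qed.

Definition gclass (p : S * Filt S) := fun q => isgerm q /\ germ_eq p q.

Definition germ_of (p : S * Filt S) (h : isgerm p) : germ S :=
  exist _ (gclass p) (ex_intro _ p (conj h erefl)).

Lemma germ_of_mem p (h : isgerm p) : sval (germ_of h) p.
Proof. split => //; exact: germ_eq_refl. Qed.

Lemma germ_inhabited (g : germ S) : exists p, sval g p.
Proof.
case: g => P [p [hp E]] /=; exists p; rewrite E; split => //; exact: germ_eq_refl.
Qed.

Lemma germ_mem_isgerm (g : germ S) p : sval g p -> isgerm p.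
Proof. case: g => P [q [hq E]] /=; rewrite E; case => //. Qed.

Lemma germ_mem_eq (g : germ S) p q : sval g p -> sval g q -> germ_eq p q.
Proof.
case: g => P [r [hr E]] /=; rewrite E => -[hp e1] [hq e2].
apply: (germ_eq_trans hp (germ_eq_sym e1) e2).
Qed.

Lemma germ_memP (g : germ S) p q : sval g p -> (sval g q <-> isgerm q /\ germ_eq p q).
Proof.
case: g => P [r [hr E]] /=; rewrite E => -[hp e1]; split.
- case=> hq e2; split => //; exact: (germ_eq_trans hp (germ_eq_sym e1) e2).
- case=> hq e2; split => //; exact: (germ_eq_trans hr e1 e2).
Qed.

Lemma germ_ext (g g' : germ S) p : sval g p -> sval g' p -> g = g'.
Proof.
move=> h1 h2; apply: eq_sig_hprop; first by move=> ? ? ?; apply: proof_irrelevance.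
apply: pred_ext => q.
rewrite (germ_memP _ h1) (germ_memP _ h2) //.
Qed.

Lemma germ_ext_eq (g g' : germ S) p q : sval g p -> sval g' q -> germ_eq p q -> g = g'.
Proof.
move=> h1 h2 e; apply: (germ_ext h1).
apply/(germ_memP _ h2); split; first exact: (germ_mem_isgerm h1).
apply: germ_eq_sym => //.
Qed.

Definition rep (g : germ S) : S * Filt S :=
  proj1_sig (constructive_indefinite_description _ (germ_inhabited g)).

Lemma rep_mem (g : germ S) : sval g (rep g).
Proof. rewrite /rep; case: constructive_indefinite_description => //. Qed.

Definition src (g : germ S) : Filt S := (rep g).2.

Definition rng (g : germ S) : Filt S := thetas (rep g).1 (rep g).2.

Lemma germ_neq0 (p : S * Filt S) : isgerm p -> p.1 <> z.
Proof.
case=> ht hs e; rewrite e smuls0 in hs; exact: (filter_zeroN (tight_filter ht) hs).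
Qed.

Lemma germ_eq_thetas_sub (p q : S * Filt S) : isgerm p -> isgerm q -> germ_eq p q ->
  forall y, thetas p.1 p.2 y -> thetas q.1 q.2 y.
Proof.
case: p => s xi; case: q => t xi' [ht hs] [_ hs'] [/= e0 [e [he hse]]] /= y.
rewrite /= -e0 in hs' *.
have hF := tight_filter ht; have hei := filter_idem hF he.
have conj_restrict u : e ** sconj u y ** e = sconj (u ** e) y.
  by rewrite /sconj star_mul (idem_star hei) !smulA.
rewrite (thetasP _ hF hs) (thetasP _ hF hs') => -[hy h]; split => //.
apply/(filter_sandwich hF he (idem_sconj t hy)).
move/(filter_sandwich hF he (idem_sconj s hy)): h.
by rewrite !conj_restrict hse.
Qed.

Lemma germ_eq_thetas (p q : S * Filt S) : isgerm p -> isgerm q -> germ_eq p q ->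
  thetas p.1 p.2 = thetas q.1 q.2.
Proof.
move=> hp hq e; apply: pred_ext => y; split; apply: germ_eq_thetas_sub => //.
exact: germ_eq_sym.
Qed.

Lemma src_mem (g : germ S) p : sval g p -> src g = p.2.
Proof. move=> h; have [e _] := germ_mem_eq (rep_mem g) h; exact: e. Qed.

Lemma rng_mem (g : germ S) p : sval g p -> rng g = thetas p.1 p.2.
Proof.
move=> h; apply: germ_eq_thetas; [exact: germ_mem_isgerm (rep_mem g) | exact: germ_mem_isgerm h |].
exact: germ_mem_eq (rep_mem g) h.
Qed.

Lemma rng_tight (g : germ S) : is_tight (rng g).
Proof.
have [ht hs] := germ_mem_isgerm (rep_mem g); exact: thetas_tight.
Qed.

(** * The topology of T(E) *)

Definition basic (xs ys : seq S) : tset S := fun xi => is_tight xi /\ in_basic xs ys xi.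

Lemma basic_open xs ys : idem_list xs -> idem_list ys -> topen (basic xs ys).
Proof.
move=> hx hy; split; first by move=> xi [].
move=> xi [ht hb]; exists xs, ys; split => //; split => //; split => //.
Qed.

Lemma in_basic_cons x xs ys (F : Filt S) : in_basic (x :: xs) ys F <-> F x /\ in_basic xs ys F.
Proof.
split.
- by case=> h1 h2; split; [apply: h1; left | split => // y hy; apply: h1; right].
- by case=> hx [h1 h2]; split => // y [<-|hy]; [|apply: h1].
Qed.

Lemma in_basic_cat (xs1 ys1 xs2 ys2 : seq S) (F : Filt S) :
  in_basic (xs1 ++ xs2) (ys1 ++ ys2) F <-> in_basic xs1 ys1 F /\ in_basic xs2 ys2 F.
Proof.
rewrite /in_basic; split.
- case=> h1 h2; split; split => x hx.
  + by apply: h1; apply/List.in_app_iff; left.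
  + by apply: h2; apply/List.in_app_iff; left.
  + by apply: h1; apply/List.in_app_iff; right.
  + by apply: h2; apply/List.in_app_iff; right.
- case=> [[h1 h2] [h3 h4]]; split => x /List.in_app_iff [] hx.
  + exact: h1. + exact: h3. + exact: h2. + exact: h4.
Qed.

Lemma idem_list_cat (l1 l2 : seq S) : idem_list l1 -> idem_list l2 -> idem_list (l1 ++ l2).
Proof. move=> h1 h2 x /List.in_app_iff []; [apply: h1 | apply: h2]. Qed.

Definition closedT (W : tset S) : Prop :=
  forall eta, is_tight eta -> ~ W eta -> exists xs ys, idem_list xs /\ idem_list ys /\
    in_basic xs ys eta /\ forall zeta, is_tight zeta -> in_basic xs ys zeta -> ~ W zeta.

Definition separating (eta : Filt S) (O : tset S) : Prop :=
  exists x, idem x /\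
    ((~ eta x /\ O = basic [:: x] [::]) \/ (eta x /\ O = basic [::] [:: x])).

Lemma separating_nbhd (eta : Filt S) (l : seq (tset S)) :
  (forall O, List.In O l -> separating eta O) ->
  exists xs ys, idem_list xs /\ idem_list ys /\ in_basic xs ys eta /\
    forall zeta, in_basic xs ys zeta -> forall O, List.In O l -> ~ O zeta.
Proof.
elim: l => [|O l IH] hl.
  by exists [::], [::]; do 3! split => //.
have [xs [ys [hxs [hys [hb hd]]]]] := IH (fun O' h => hl O' (or_intror h)).
have [x [hx [[hnx ->]|[hex ->]]]] := hl O (or_introl erefl).
- exists xs, (x :: ys); do 2! split => //; first by move=> y [<-|]; [|apply: hys].
  split; first by case: hb => hb1 hb2; split => // y [<-|]; [|apply: hb2].
  move=> zeta [hz1 hz2] O' [<-|hO'].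
  + by move=> [_ [hzx _]]; apply: (hz2 x); [left | apply: hzx; left].
  + by apply: (hd zeta _ O' hO'); split => // y hy; apply: hz2; right.
- exists (x :: xs), ys; split; first by move=> y [<-|]; [|apply: hxs].
  split => //; split; first by case: hb => hb1 hb2; split => // y [<-|]; [|apply: hb1].
  move=> zeta [hz1 hz2] O' [<-|hO'].
  + by move=> [_ [_ hzx]]; apply: (hzx x); [left | apply: hz1; left].
  + by apply: (hd zeta _ O' hO'); split => // y hy; apply: hz1; right.
Qed.

Lemma tcompact_closed (K : tset S) : tcompact K -> (forall xi, K xi -> is_tight xi) -> closedT K.
Proof.
move=> hK hKt eta het hne.
have hC : forall O, separating eta O -> topen O.
  by move=> O [x [hx [[_ ->]|[_ ->]]]]; apply: basic_open => // y [<-|[]].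
have hcov : forall xi, K xi -> exists O, separating eta O /\ O xi.
  move=> xi hxi.
  have hneq : xi <> eta by move=> e; apply: hne; rewrite -e.
  have [x [hx [[h1 h2]|[h1 h2]]]] :=
    filter_neq (tight_filter (hKt _ hxi)) (tight_filter het) hneq.
  - exists (basic [:: x] [::]); split; first by exists x; split => //; left.
    by split; [exact: hKt | split => // y [<-|[]]].
  - exists (basic [::] [:: x]); split; first by exists x; split => //; right.
    by split; [exact: hKt | split => // y [<-|[]]].
have [l [hl hlc]] := hK _ hC hcov.
have [xs [ys [hxs [hys [hb hd]]]]] := separating_nbhd hl.
exists xs, ys; do 3! split => //.
move=> zeta _ hzb hKz; have [O [hO hOz]] := hlc _ hKz.
exact: (hd zeta hzb O hO hOz).
Qed.

Lemma closed_sub_tcompact (K W : tset S) : tcompact K -> (forall xi, K xi -> is_tight xi) ->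
  (forall xi, W xi -> K xi) -> closedT W -> tcompact W.
Proof.
move=> hK hKt hWK hW C hC hcov.
pose Wc : tset S := fun zeta => is_tight zeta /\ ~ W zeta.
have hWc : topen Wc.
  split; first by move=> ? [].
  move=> eta [het hne]; have [xs [ys [hxs [hys [hb hd]]]]] := hW eta het hne.
  exists xs, ys; do 3! split => //.
  move=> zeta hz hzb; split => //; exact: hd.
pose C' := fun O => C O \/ O = Wc.
have [l [hl hlc]] : exists l : seq (tset S), (forall O, List.In O l -> C' O) /\
      forall xi, K xi -> exists O, List.In O l /\ O xi.
  apply: hK.
  - by move=> O [hO|->]; [apply: hC|].
  - move=> xi hxi; case: (classic (W xi)) => hw.
    + by have [O [hO hOx]] := hcov xi hw; exists O; split => //; left.
    + by exists Wc; split; [right | split => //; apply: hKt].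
exists (filter (asbool C) l); split.
- by move=> O /In_filter [_ /asboolP].
- move=> xi hxi; have [O [hO hOx]] := hlc xi (hWK xi hxi).
  exists O; split => //; apply/In_filter; split => //; apply/asboolP.
  case: (hl O hO) => // e; rewrite e in hOx; by case: hOx.
Qed.

Lemma tcompact_union (K1 K2 : tset S) : tcompact K1 -> tcompact K2 ->
  tcompact (fun xi => K1 xi \/ K2 xi).
Proof.
move=> h1 h2 C hC hcov.
have [l1 [hl1 hc1]] := h1 C hC (fun xi hx => hcov xi (or_introl hx)).
have [l2 [hl2 hc2]] := h2 C hC (fun xi hx => hcov xi (or_intror hx)).
exists (l1 ++ l2); split.
- by move=> O /List.in_app_iff [] ?; [apply: hl1 | apply: hl2].
- move=> xi [hx|hx].
  + by have [O [hO hOx]] := hc1 xi hx; exists O; split => //; apply/List.in_app_iff; left.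
  + by have [O [hO hOx]] := hc2 xi hx; exists O; split => //; apply/List.in_app_iff; right.
Qed.

Lemma tcompact_empty : tcompact (fun _ : Filt S => False).
Proof. by move=> C _ _; exists [::]; split. Qed.

Lemma tcompact_ext (K K' : tset S) : (forall xi, K xi <-> K' xi) -> tcompact K -> tcompact K'.
Proof. by move=> h; rewrite (pred_ext h). Qed.

Lemma tcompact_bigunion (A : Type) (l : seq A) (F : A -> tset S) :
  (forall a, List.In a l -> tcompact (F a)) ->
  tcompact (fun xi => exists a, List.In a l /\ F a xi).
Proof.
elim: l => [|a l IH] h.
- apply: tcompact_ext tcompact_empty => xi; split => // [[a [[] _]]].
- have := tcompact_union (h a (or_introl erefl)) (IH (fun b hb => h b (or_intror hb))).
  apply: tcompact_ext => xi; split.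
  + by case=> [hx|[b [hb hx]]]; [exists a; split => //; left | exists b; split => //; right].
  + by case=> b [[<-|hb] hx]; [left | right; exists b].
Qed.

(** * Locally constant functions on T(E) *)

Section LocallyConstant.
Variable R : comPzRingType.

Definition loc_const (f : Filt S -> R) (xi : Filt S) : Prop :=
  exists xs ys, idem_list xs /\ idem_list ys /\ in_basic xs ys xi /\
    forall zeta, is_tight zeta -> in_basic xs ys zeta -> f zeta = f xi.

Lemma loc_const_cst c xi : loc_const (fun _ => c) xi.
Proof.
exists [::], [::]; split; first by move=> ? []. split; first by move=> ? [].
split; [by split => ? [] | by []].
Qed.

Lemma loc_constD f h xi : loc_const f xi -> loc_const h xi -> loc_const (fun x => f x + h x) xi.
Proof.
move=> [xs1 [ys1 [h1 [h2 [h3 h4]]]]] [xs2 [ys2 [h5 [h6 [h7 h8]]]]].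
exists (xs1 ++ xs2), (ys1 ++ ys2); split; first exact: idem_list_cat.
split; first exact: idem_list_cat.
split; first by apply/in_basic_cat.
move=> zeta hz /in_basic_cat [b1 b2]; by rewrite h4 // h8.
Qed.

Lemma loc_constZ c f xi : loc_const f xi -> loc_const (fun x => c * f x) xi.
Proof. move=> [xs [ys [h1 [h2 [h3 h4]]]]]; exists xs, ys; do 3! split => //.
move=> zeta hz hb; by rewrite h4.
Qed.

Lemma loc_const_indic (U : tset S) xi : topen U -> closedT U -> is_tight xi -> loc_const (indic U) xi.
Proof.
move=> hU hc hxi; case: (classic (U xi)) => hx.
- have [xs [ys [h1 [h2 [h3 h4]]]]] := hU.2 xi hx.
  exists xs, ys; do 3! split => //.
  move=> zeta hz hb; rewrite !indic1 //; exact: h4.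
- have [xs [ys [h1 [h2 [h3 h4]]]]] := hc xi hxi hx.
  exists xs, ys; do 3! split => //.
  move=> zeta hz hb; rewrite !indic0 //; exact: h4.
Qed.

Lemma Tc_closedT (U : tset S) : Tc U -> closedT U.
Proof. move=> [ho hc]; apply: tcompact_closed => //; exact: ho.1. Qed.

Definition lsum (l : seq (R * tset S)) : Filt S -> R :=
  fun xi => \sum_(p <- l) p.1 * indic p.2 xi.

Lemma loc_const_lsum l xi : (forall p, List.In p l -> Tc p.2) -> is_tight xi -> loc_const (lsum l) xi.
Proof.
elim: l => [|p l IH] hl hxi.
- have -> : lsum [::] = (fun _ => 0) by apply functional_extensionality => x; rewrite /lsum big_nil.
  exact: loc_const_cst.
- have -> : lsum (p :: l) = (fun x => p.1 * indic p.2 x + lsum l x).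
    by apply functional_extensionality => x; rewrite /lsum big_cons.
  apply: loc_constD; last by apply: IH => // q hq; apply: hl; right.
  apply: loc_constZ; apply: loc_const_indic => //; have h := hl p (or_introl erefl).
  + exact: h.1.
  + exact: Tc_closedT.
Qed.

Fixpoint subsums (l : seq R) : seq R :=
  match l with [::] => [:: 0] | r :: l => subsums l ++ map (fun v => r + v) (subsums l) end.

Lemma lsum_subsums l xi : lsum l xi \in subsums (map fst l).
Proof.
elim: l => [|p l IH]; first by rewrite /lsum big_nil inE.
rewrite /lsum big_cons /= mem_cat -/(lsum l xi).
case: (classic (p.2 xi)) => h.
- rewrite indic1 // mulr1; apply/orP; right; exact: map_f.
- by rewrite indic0 // mulr0 add0r IH.
Qed.

Lemma lsum_out l xi : (forall p, List.In p l -> ~ p.2 xi) -> lsum l xi = 0.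
Proof.
rewrite /lsum; elim: l => [|p l IH] h; first by rewrite big_nil.
rewrite big_cons indic0 ?mulr0 ?add0r; last by apply: h; left.
by apply: IH => q hq; apply: h; right.
Qed.

Definition level (f : Filt S -> R) (v : R) : tset S := fun xi => is_tight xi /\ f xi = v.

Lemma topen_level f v : (forall xi, is_tight xi -> loc_const f xi) -> topen (level f v).
Proof.
move=> hf; split; first by move=> xi [].
move=> xi [ht hfx]; have [xs [ys [h1 [h2 [h3 h4]]]]] := hf xi ht.
exists xs, ys; do 3! split => //.
by move=> zeta hz hb; split => //; rewrite (h4 zeta hz hb).
Qed.

Lemma closedT_level f v : (forall xi, is_tight xi -> loc_const f xi) -> closedT (level f v).
Proof.
move=> hf eta het hne; have [xs [ys [h1 [h2 [h3 h4]]]]] := hf eta het.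
exists xs, ys; do 3! split => //.
by move=> zeta hz hb [_ hzv]; apply: hne; split => //; rewrite -(h4 zeta hz hb).
Qed.

Lemma level_nth_disjoint f (V : seq R) i j xi : uniq V -> (i < j < size V)%N ->
  level f (nth 0 V i) xi -> ~ level f (nth 0 V j) xi.
Proof.
move=> hV /andP [hij hj] [_ ei] [_ ej].
have hi : (i < size V)%N by apply: ltn_trans hj.
move: (ei); rewrite ej => /eqP; rewrite nth_uniq // => /eqP eij.
by rewrite eij ltnn in hij.
Qed.

Lemma sum_levels f (V : seq R) : uniq V -> 0 \notin V ->
  (forall xi, f xi != 0 -> is_tight xi /\ f xi \in V) ->
  f = fun xi => \sum_(v <- V) v * indic (level f v) xi.
Proof.
move=> hV hV0 hf; apply: functional_extensionality => xi.
case: (classic (is_tight xi)) => ht.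
- transitivity (\sum_(v <- V) (if v == f xi then f xi else 0)); last first.
    apply: eq_bigr => v _; case: eqP => [->|ne].
    + by rewrite indic1 ?mulr1.
    + by rewrite indic0 ?mulr0 // => [[_ e]]; apply: ne.
  rewrite sum_pick //; case: ifP => // hn; apply/eqP; apply: contraFT hn => hnz.
  exact: (hf xi hnz).2.
- rewrite big1 => [|v _]; last by rewrite indic0 ?mulr0 // => [[]].
  by case: (eqVneq (f xi) 0) => // /hf [/ht].
Qed.
End LocallyConstant.

(** * Pure gradings *)

Section Grading.
Variables (G : group) (phi : S -> G).
Hypothesis hphi : pure_grading phi.
Local Notation "a *g b" := (@gmul G a b) (at level 40, left associativity).
Local Notation inv := (@ginv G).

Lemma phiM a b : a ** b <> z -> phi (a ** b) = phi a *g phi b.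
Proof. by case: hphi => h _; apply: h. Qed.

Lemma phi_idem e : e <> z -> idem e -> phi e = gone G.
Proof. by case: hphi => _ h he hi; apply/h. Qed.

Lemma phi_eq1_idem s : s <> z -> phi s = gone G -> idem s.
Proof. by case: hphi => _ h hs hi; apply/h. Qed.

Lemma phi_star s : s <> z -> phi (s^*) = inv (phi s).
Proof.
move=> hs; apply: ginv_uniq; rewrite -phiM; last exact: star_mul_neq0.
apply: phi_idem; [exact: star_mul_neq0 | exact: idem_star_mul].
Qed.

Lemma phi_mul_idem s e : s ** e <> z -> e <> z -> idem e -> phi (s ** e) = phi s.
Proof. move=> h he hi; by rewrite (phiM h) (phi_idem he hi) gmul1r. Qed.

Lemma germ_eq_phi (p q : S * Filt S) : isgerm p -> germ_eq p q -> phi p.1 = phi q.1.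
Proof.
case: p => s xi; case: q => t xi'; move=> [ht hs] [/= e0 [e [he hse]]] /=.
rewrite /= in hs ht he.
have hF := tight_filter ht; have hei := filter_idem hF he.
have hne : e <> z by apply: (filter_neq0 hF he).
have hse0 : s ** e <> z.
  move=> E; apply: (filter_zeroN hF).
  have : xi (s^* ** s ** e) by apply: filter_meet.
  by rewrite -smulA E smuls0.
by rewrite -(phi_mul_idem hse0 hne hei) hse phi_mul_idem // -hse.
Qed.

Lemma grade_star_mul_inj (u v : S) : u <> z -> u^* ** u = v^* ** v -> phi u = phi v -> u = v.
Proof.
move=> hu uv huv; set e := u^* ** u.
have ue : u ** e = u by rewrite /e smulA smul_star_mul.
have ve : v ** e = v by rewrite /e uv smulA smul_star_mul.
have hv : v <> z by move=> v0; apply: (star_mul_neq0 hu); rewrite uv v0 smuls0.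
have vu0 : v ** u^* <> z.
  move=> vu; apply: (mul_star_neq0 hv).
  have <- : v ** u^* ** (u ** v^*) = v ** v^* by rewrite !smulA -(smulA v) -/e ve.
  by rewrite vu smul0s.
have f_idem : idem (v ** u^*).
  by apply: phi_eq1_idem => //; rewrite phiM // phi_star // huv gmulVr.
set f := v ** u^*.
have fE : u ** v^* = f by rewrite /f -(idem_star f_idem) star_mul starK.
have fu : f ** u = v by rewrite /f -smulA -/e ve.
have fv : f ** v = u by rewrite -fE -smulA -uv -/e ue.
by rewrite -fv -fu smulA f_idem.
Qed.

Lemma germ_eq_same_grade (s t : S) (xi : Filt S) : isgerm (s, xi) -> isgerm (t, xi) ->
  phi s = phi t -> germ_eq (s, xi) (t, xi).
Proof.
move=> [ht hs] [_ ht2] hst; rewrite /= in ht hs ht2.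
have hF := tight_filter ht.
set e := s^* ** s ** (t^* ** t).
have he : xi e by apply: filter_meet.
have he_idem : idem e := filter_idem hF he.
have he0 : e <> z := filter_neq0 hF he.
have se : (s ** e)^* ** (s ** e) = e.
  by apply: star_mul_restrict => //; apply: leE_mulr; apply: idem_star_mul.
have te : (t ** e)^* ** (t ** e) = e.
  by apply: star_mul_restrict => //; apply: leE_mull; apply: idem_star_mul.
have hse : s ** e <> z by move=> se0; apply: he0; rewrite -se se0 smuls0.
have hte : t ** e <> z by move=> te0; apply: he0; rewrite -te te0 smuls0.
split => //=; exists e; split => //.
apply: grade_star_mul_inj => //; first by rewrite se te.
by rewrite !phi_mul_idem.
Qed.

Definition grade (g : germ S) : G := phi (rep g).1.

Lemma grade_mem (g : germ S) p : sval g p -> grade g = phi p.1.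
Proof.
move=> h; apply: germ_eq_phi; [exact: germ_mem_isgerm (rep_mem g) |].
exact: germ_mem_eq (rep_mem g) h.
Qed.

Lemma germ_inj_grade_src (g g' : germ S) : grade g = grade g' -> src g = src g' -> g = g'.
Proof.
move=> e1 e2.
have h1 := rep_mem g; have h2 := rep_mem g'.
case E1: (rep g) h1 => [s xi] h1; case E2: (rep g') h2 => [t xi'] h2.
rewrite (grade_mem h1) (grade_mem h2) /= in e1.
rewrite (src_mem h1) (src_mem h2) /= in e2.
rewrite -e2 in h2.
apply: (germ_ext_eq h1 h2); apply: germ_eq_same_grade => //.
- exact: germ_mem_isgerm h1.
- exact: germ_mem_isgerm h2.
Qed.

Lemma isgerm_star (s : S) (xi : Filt S) : isgerm (s, xi) -> isgerm (s^*, thetas s xi).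
Proof.
move=> [ht hs]; rewrite /= in ht hs; split => /=; first exact: thetas_tight.
rewrite starK; apply: thetas_mul_star => //; exact: tight_filter.
Qed.

Lemma germ_inj_grade_rng (g g' : germ S) : grade g = grade g' -> rng g = rng g' -> g = g'.
Proof.
move=> e1 e2.
have h1 := rep_mem g; have h2 := rep_mem g'.
case E1: (rep g) h1 => [s xi] h1; case E2: (rep g') h2 => [t xi'] h2.
rewrite (grade_mem h1) (grade_mem h2) /= in e1.
rewrite (rng_mem h1) (rng_mem h2) /= in e2.
have hg1 := germ_mem_isgerm h1; have hg2 := germ_mem_isgerm h2.
have hi1 := isgerm_star hg1; have hi2 := isgerm_star hg2.
rewrite e2 in hi1.
have hs0 := germ_neq0 hg1; have ht0 := germ_neq0 hg2.
have := germ_eq_same_grade hi1 hi2.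
rewrite !phi_star // e1 => /(_ erefl) he.
have := germ_eq_thetas hi1 hi2 he; rewrite /= -e2.
have [ht1 hs1] := hg1; have [ht2 hs2] := hg2.
rewrite (thetasK (tight_filter ht1) hs1) e2 (thetasK (tight_filter ht2) hs2) => exi.
apply: germ_inj_grade_src; first by rewrite (grade_mem h1) (grade_mem h2).
by rewrite (src_mem h1) (src_mem h2).
Qed.

Lemma grade_germ_of (p : S * Filt S) (h : isgerm p) : grade (germ_of h) = phi p.1.
Proof. exact: grade_mem (germ_of_mem h). Qed.

Lemma rng_germ_of (p : S * Filt S) (h : isgerm p) : rng (germ_of h) = thetas p.1 p.2.
Proof. exact: rng_mem (germ_of_mem h). Qed.

Lemma DgP (g : G) (eta : Filt S) :
  Dg phi g eta <-> is_tight eta /\ exists s, s <> z /\ phi s = g /\ eta (s ** s^*).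
Proof.
split.
- move=> [ht [x [[hx [[s [hs [hsg hle]]]|[_ ->]]] hex]]].
  + split => //; exists s; split => //; split => //.
    by apply: (filter_up (tight_filter ht) hex); [exact: idem_mul_star|].
  + by case: (filter_zeroN (tight_filter ht) hex).
- move=> [ht [s [hs [hsg he]]]]; split => //; exists (s ** s^*); split => //.
  split; first exact: idem_mul_star. left; exists s; split => //; split => //.
  exact: (idem_mul_star s).
Qed.

Lemma Dg_germ (g : G) (eta : Filt S) : Dg phi g eta ->
  exists ga : germ S, grade ga = g /\ rng ga = eta.
Proof.
move=> /DgP [ht [s [hs [hsg he]]]].
have hF := tight_filter ht.
have hp : isgerm (s, thetas (s^*) eta).
  split => /=; first by apply: thetas_tight => //; rewrite starK.
  apply/thetasP => //; first by rewrite starK.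
  split; first exact: idem_star_mul.
  by rewrite /sconj starK smulA smul_star_mul.
exists (germ_of hp); split; first by rewrite grade_germ_of.
rewrite rng_germ_of /=.
have := thetasK (s := s^*) hF; rewrite starK => -> //.
Qed.

Lemma rng_Dg (ga : germ S) : Dg phi (grade ga) (rng ga).
Proof.
have h := rep_mem ga; case E: (rep ga) h => [s xi] h.
have hg := germ_mem_isgerm h.
apply/DgP; split; first exact: rng_tight.
exists s; split; first exact: (germ_neq0 hg).
split; first by rewrite (grade_mem h).
rewrite (rng_mem h) /=; have [ht hs] := hg.
apply: thetas_mul_star => //; exact: tight_filter.
Qed.

Lemma theta_grade (s : S) (xi : Filt S) : isgerm (s, xi) -> theta phi (phi s) xi = thetas s xi.
Proof.
move=> hg; have [ht hs] := hg; rewrite /= in ht hs.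
have hF := tight_filter ht.
apply: pred_ext => y; split.
- move=> [hy [t [x [ht0 [htg [hx [hxt hy2]]]]]]].
  have htt : xi (t^* ** t) by apply: (filter_up hF hx); [exact: idem_star_mul|].
  have hg' : isgerm (t, xi) by split.
  have E := germ_eq_thetas hg' hg (germ_eq_same_grade hg' hg htg).
  by rewrite /= in E; rewrite -E; split => //; exists x.
- move=> [hy [x [hx [hxs hy2]]]]; split => //.
  by exists s, x; split; first exact: germ_neq0 hg.
Qed.

Lemma gprodP (al be ga : germ S) : gprod al be ga ->
  rng al = rng ga /\ src al = rng be /\ src be = src ga /\ grade ga = grade al *g grade be.
Proof.
move=> [s [t [eta [hb [ha hc]]]]].
have [htt htm] := germ_mem_isgerm hb; rewrite /= in htt htm.
have [_ hsm] := germ_mem_isgerm ha; rewrite /= in hsm.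
have hg := germ_mem_isgerm hc.
split.
  rewrite (rng_mem ha) (rng_mem hc) /=; apply: thetas_mul => //; exact: tight_filter.
split; first by rewrite (src_mem ha) (rng_mem hb).
split; first by rewrite (src_mem hb) (src_mem hc).
rewrite (grade_mem hc) (grade_mem ha) (grade_mem hb) /=.
apply: phiM => //; exact: germ_neq0 hg.
Qed.

Lemma gprod_uniq (al be al' be' ga : germ S) : gprod al be ga -> gprod al' be' ga ->
  grade al = grade al' -> al = al' /\ be = be'.
Proof.
move=> h1 h2 e.
have [r1 [s1 [t1 g1]]] := gprodP h1; have [r2 [s2 [t2 g2]]] := gprodP h2.
split; first by apply: germ_inj_grade_rng => //; rewrite r1 r2.
apply: germ_inj_grade_src; last by rewrite t1 t2.
by apply: (@gmul_cancl G (grade al)); rewrite -g1 e -g2.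
Qed.

Lemma gprod_exists (al be : germ S) : src al = rng be ->
  exists ga, gprod al be ga /\ grade ga = grade al *g grade be /\ rng ga = rng al.
Proof.
move=> e.
have ha := rep_mem al; case Ea: (rep al) ha => [s xi] ha.
have hb := rep_mem be; case Eb: (rep be) hb => [u om] hb.
rewrite (src_mem ha) (rng_mem hb) /= in e.
have [hot hou] := germ_mem_isgerm hb; rewrite /= in hot hou.
have [hxt hxs] := germ_mem_isgerm ha; rewrite /= in hxt hxs.
have hoF := tight_filter hot.
have hp : isgerm (s ** u, om).
  split => //=; rewrite star_mul.
  have : thetas u om (s^* ** s) by rewrite -e.
  move/(thetasP _ hoF hou) => [_]; rewrite /sconj.
  by have -> : u^* ** (s^* ** s) ** u = u^* ** s^* ** (s ** u) by rewrite !smulA.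
exists (germ_of hp); split.
  exists s, u, om; split => //; split; first by rewrite -e.
  exact: germ_of_mem.
split.
  rewrite grade_germ_of (grade_mem ha) (grade_mem hb) /=; apply: phiM => //; exact: germ_neq0 hp.
rewrite rng_germ_of (rng_mem ha) /= e; symmetry; apply: thetas_mul => //.
by rewrite -e.
Qed.

Definition factor (ga : germ S) (t : G) : option (germ S * germ S) :=
  match excluded_middle_informative
          (exists q : germ S * germ S, gprod q.1 q.2 ga /\ grade q.1 = t) with
  | left H => Some (proj1_sig (constructive_indefinite_description _ H))
  | right _ => None
  end.

Lemma factorP ga t q : factor ga t = Some q -> gprod q.1 q.2 ga /\ grade q.1 = t.
Proof.
rewrite /factor; case: excluded_middle_informative => // H [<-].
by case: constructive_indefinite_description.
Qed.

Lemma factorN ga t q : factor ga t = None -> gprod q.1 q.2 ga -> grade q.1 <> t.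
Proof.
by rewrite /factor; case: excluded_middle_informative => // hn _ hq ht; apply: hn; exists q.
Qed.

Lemma factor_gprod ga q : gprod q.1 q.2 ga -> factor ga (grade q.1) = Some q.
Proof.
move=> hq; case E: (factor ga (grade q.1)) => [q'|]; last by case: (factorN E hq).
have [hq' eq'] := factorP E; have [e1 e2] := gprod_uniq hq' hq eq'.
by rewrite [q']surjective_pairing [q]surjective_pairing e1 e2.
Qed.

Lemma theta_germ (al : germ S) :
  theta phi (inv (grade al)) (rng al) = src al /\ Dg phi (inv (grade al)) (src al) /\
  theta phi (grade al) (src al) = rng al.
Proof.
have ha := rep_mem al; case Ea: (rep al) ha => [s xi] ha.
have hg := germ_mem_isgerm ha.
have hi := isgerm_star hg.
have hs0 := germ_neq0 hg; rewrite /= in hs0.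
have [ht hs] := hg; rewrite /= in ht hs.
rewrite (grade_mem ha) (rng_mem ha) (src_mem ha) /=.
split.
  rewrite -(phi_star hs0) (theta_grade hi) /=; exact: thetasK (tight_filter ht) hs.
split.
  apply/DgP; split => //; exists (s^*); split; first exact: star_neq0.
  by rewrite phi_star // starK.
exact: theta_grade hg.
Qed.

(** * Compact open bisections of a fixed grade *)

Definition bisection_of (g : G) (U : tset S) : germ S -> Prop := fun ga => grade ga = g /\ U (rng ga).

Definition ranges (g : G) (O : germ S -> Prop) : tset S :=
  fun eta => exists ga, O ga /\ grade ga = g /\ rng ga = eta.

Lemma ThetaP s U (h : germ S) : Theta s U h -> exists xi, U xi /\ sval h (s, xi) /\
  grade h = phi s /\ rng h = thetas s xi /\ src h = xi.
Proof.
move=> [xi [hU hs]]; exists xi; split => //; split => //.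
by rewrite (grade_mem hs) (rng_mem hs) (src_mem hs).
Qed.

Lemma gopen_bisection_of g U : topen U -> gopen (bisection_of g U).
Proof.
move=> hU ga [hg hr].
have h := rep_mem ga; case E: (rep ga) h => [s xi] h.
have [ht hs] := germ_mem_isgerm h; rewrite /= in ht hs.
have hF := tight_filter ht.
rewrite (grade_mem h) /= in hg; rewrite (rng_mem h) /= in hr.
have [xs [ys [hxs [hys [hb hn]]]]] := hU.2 _ hr.
pose U' : tset S := fun zeta => is_tight zeta /\ zeta (s^* ** s) /\
   in_basic (map (sconj s) xs) (map (sconj s) ys) zeta.
exists s, U'; split.
  split; first by move=> ? [].
  move=> zeta [hz [hzs hzb]]; exists (s^* ** s :: map (sconj s) xs), (map (sconj s) ys).
  split; first by move=> x [<-|hx]; [exact: idem_star_mul | apply: (idem_list_sconj (s:=s) hxs); exact hx].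
  split; first exact: idem_list_sconj.
  split; first by apply/in_basic_cons.
  by move=> eta het /in_basic_cons [h1 h2]; split.
split; first by move=> ? [_ []].
split.
  exists xi; split => //; split => //; split => //.
  by apply/(in_basic_thetas hF hs hxs hys).
move=> h' /ThetaP [zeta [[hz [hzs hzb]] [hm [hg' [hr' _]]]]].
split; first by rewrite hg' hg.
rewrite hr'; apply: hn; first exact: thetas_tight.
by apply/(in_basic_thetas (tight_filter hz) hzs hxs hys).
Qed.

Lemma topen_ranges g O : gopen O -> topen (ranges g O).
Proof.
move=> hO; split; first by move=> eta [ga [_ [_ <-]]]; apply: rng_tight.
move=> eta [ga [hga [hg hr]]].
have [s [U [hU [hUs [hT hTO]]]]] := hO ga hga.
have [xi [hxi [hm [hg' [hr' _]]]]] := ThetaP hT.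
have ht : is_tight xi := hU.1 _ hxi.
have hF := tight_filter ht.
have hs : xi (s^* ** s) := hUs _ hxi.
have [xs [ys [hxs [hys [hb hn]]]]] := hU.2 _ hxi.
have heta : is_tight eta by rewrite -hr; apply: rng_tight.
have hes : eta (s^*^* ** s^*) by rewrite starK -hr hr'; apply: thetas_mul_star.
have hinv : thetas (s^*) eta = xi by rewrite -hr hr' thetasK.
exists (s ** s^* :: map (sconj (s^*)) xs), (map (sconj (s^*)) ys).
split; first by move=> x [<-|hx]; [exact: idem_mul_star | apply: (idem_list_sconj (s:=s^*) hxs); exact hx].
split; first exact: idem_list_sconj.
split.
  apply/in_basic_cons; split; first by rewrite starK in hes.
  apply/(in_basic_thetas (tight_filter heta) hes hxs hys); by rewrite hinv.
move=> zeta hz /in_basic_cons [hzs hzb].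
have hzs' : zeta (s^*^* ** s^*) by rewrite starK.
have hzF := tight_filter hz.
have ht' := thetas_tight hz hzs'.
have hb' := (in_basic_thetas hzF hzs' hxs hys).2 hzb.
have hU' : U (thetas (s^*) zeta) by apply: hn.
have hg0 : isgerm (s, thetas (s^*) zeta) by split => //; apply: hUs.
exists (germ_of hg0); split.
  apply: hTO; exists (thetas (s^*) zeta); split => //; exact: germ_of_mem.
split; first by rewrite grade_germ_of /= -hg' hg.
rewrite rng_germ_of /=.
have := thetasK hzF hzs'; by rewrite starK.
Qed.

Lemma gcompact_bisection_of g U : TcI phi g U -> gcompact (bisection_of g U).
Proof.
move=> [[hUo hUc] hUD] C hC hcov.
pose C' := fun V : tset S => exists O, C O /\ V = ranges g O.
have [l' [hl' hc']] : exists l' : seq (tset S), (forall V, List.In V l' -> C' V) /\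
    forall xi, U xi -> exists V, List.In V l' /\ V xi.
  apply: hUc.
  - by move=> V [O [hO ->]]; apply: topen_ranges; apply: hC.
  - move=> eta heta.
    have [ga [hg hr]] := Dg_germ (hUD _ heta).
    have [O [hO hOg]] := hcov ga (conj hg (eq_ind_r U heta hr)).
    by exists (ranges g O); split; [exists O | exists ga].
have [l [hl el]] := lift_list hl'.
exists l; split => //.
move=> ga [hg hr]; have [V [hV hVx]] := hc' _ hr.
rewrite el in hV; have [O [eO hO]] := (List.in_map_iff _ _ _).1 hV.
exists O; split => //.
rewrite -eO in hVx; have [ga' [hO' [hg' hr']]] := hVx.
have -> : ga = ga' by apply: germ_inj_grade_rng; [rewrite hg hg' | by rewrite hr'].
exact: hO'.
Qed.

Lemma tcompact_ranges g (K : germ S -> Prop) : gcompact K -> (forall ga, K ga -> grade ga = g) ->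
  tcompact (ranges g K).
Proof.
move=> hK hKg C hC hcov.
pose C' := fun O : germ S -> Prop => exists V, C V /\ O = bisection_of g V.
have [l' [hl' hc']] : exists l' : seq (germ S -> Prop), (forall O, List.In O l' -> C' O) /\
    forall ga, K ga -> exists O, List.In O l' /\ O ga.
  apply: hK.
  - by move=> O [V [hV ->]]; apply: gopen_bisection_of; apply: hC.
  - move=> ga hga.
    have [V [hV hVx]] := hcov (rng ga) (ex_intro _ ga (conj hga (conj (hKg _ hga) erefl))).
    by exists (bisection_of g V); split; [exists V | split => //; apply: hKg].
have [l [hl el]] := lift_list hl'.
exists l; split => //.
move=> eta [ga [hga [hg <-]]]; have [O [hO hOx]] := hc' _ hga.
rewrite el in hO; have [V [eV hV]] := (List.in_map_iff _ _ _).1 hO.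
exists V; split => //; rewrite -eV in hOx; exact: hOx.2.
Qed.

Lemma bisection_bisection_of g U : bisection (bisection_of g U).
Proof.
move=> a b [ga hra] [gb hrb] [[xi [[s ha] [t hb]]]|[eta [[s [xi [ha ->]]] [t [xi' [hb e]]]]]].
- apply: germ_inj_grade_src; first by rewrite ga gb.
  by rewrite (src_mem ha) (src_mem hb).
- apply: germ_inj_grade_rng; first by rewrite ga gb.
  by rewrite (rng_mem ha) (rng_mem hb) /= e.
Qed.

Lemma gopen_grade (O : germ S -> Prop) (P : G -> Prop) :
  gopen O -> gopen (fun ga => O ga /\ P (grade ga)).
Proof.
move=> hO ga [hga hP].
have [s [U [hU [hUs [hT hTO]]]]] := hO ga hga.
exists s, U; split => //; split => //; split => //.
move=> h hh; split; first exact: hTO.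
have [_ [_ [_ [e1 _]]]] := ThetaP hh; have [_ [_ [_ [e2 _]]]] := ThetaP hT.
by rewrite e1 -e2.
Qed.

Lemma gcompact_grade (B : germ S -> Prop) g : gcompact B -> gopen B ->
  gcompact (fun ga => B ga /\ grade ga = g).
Proof.
move=> hB hBo C hC hcov.
pose Bc := fun ga => B ga /\ (fun h => h <> g) (grade ga).
have hBc : gopen Bc by apply: gopen_grade.
pose C' := fun O => C O \/ O = Bc.
have [l [hl hlc]] : exists l : seq (germ S -> Prop), (forall O, List.In O l -> C' O) /\
    forall ga, B ga -> exists O, List.In O l /\ O ga.
  apply: hB.
  - by move=> O [hO|->]; [apply: hC|].
  - move=> ga hga; case: (classic (grade ga = g)) => e.
    + by have [O [hO hOx]] := hcov ga (conj hga e); exists O; split => //; left.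
    + by exists Bc; split; [right | split].
exists (filter (asbool C) l); split.
- by move=> O /In_filter [_ /asboolP].
- move=> ga [hga e]; have [O [hO hOx]] := hlc ga hga.
  exists O; split => //; apply/In_filter; split => //; apply/asboolP.
  case: (hl O hO) => // eO; rewrite eO in hOx; by case: hOx.
Qed.

Lemma finite_grades (B : germ S -> Prop) : gcompact B -> gopen B ->
  exists gs : seq G, forall ga, B ga -> List.In (grade ga) gs.
Proof.
move=> hB hBo.
pose C := fun O : germ S -> Prop => gopen O /\ exists g, forall ga, O ga -> grade ga = g.
have [l [hl hlc]] : exists l : seq (germ S -> Prop), (forall O, List.In O l -> C O) /\
    forall ga, B ga -> exists O, List.In O l /\ O ga.
  apply: hB; first by move=> O [].
  move=> ga hga; have [s [U [hU [hUs [hT hTO]]]]] := hBo ga hga.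
  exists (Theta s U); split => //; split.
  + move=> h hh; exists s, U; split => //.
  + exists (phi s) => h hh; by have [_ [_ [_ [e _]]]] := ThetaP hh.
have [gs hgs] := const_cover_values (fun O hO => (hl O hO).2).
exists gs => ga hga; have [O [hO hOx]] := hlc ga hga; exact: hgs O ga hO hOx.
Qed.

Lemma ranges_sub_Dg g (O : germ S -> Prop) eta : ranges g O eta -> Dg phi g eta.
Proof. move=> [ga [_ [<- <-]]]; exact: rng_Dg. Qed.

Lemma bisection_of_ranges g (O : germ S -> Prop) ga : bisection_of g (ranges g O) ga <-> O ga /\ grade ga = g.
Proof.
split.
- move=> [hg [ga' [hO [hg' hr]]]].
  have -> : ga = ga' by apply: germ_inj_grade_rng; [rewrite hg hg' | by rewrite hr].
  by split.
- move=> [hO hg]; split => //; by exists ga.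
Qed.

Lemma TcI_ranges g (B : germ S -> Prop) : gcompact B -> gopen B ->
  TcI phi g (ranges g (fun ga => B ga /\ grade ga = g)).
Proof.
move=> hB hBo; split; last by move=> eta; apply: ranges_sub_Dg.
split.
- apply: topen_ranges; apply: (gopen_grade (P := fun h => h = g)) => //.
- apply: tcompact_ranges; first exact: gcompact_grade.
  by move=> ga [].
Qed.

Lemma cob_bisection_of g U : TcI phi g U -> compact_open_bisection (bisection_of g U).
Proof.
move=> hU; split; first by apply: gopen_bisection_of; exact: hU.1.1.
split; [exact: gcompact_bisection_of | exact: bisection_bisection_of].
Qed.

(** * The isomorphism *)

Section Algebra.
Variable R : comPzRingType.

Lemma inLc_lsum (g : G) (l : seq (R * tset S)) :
  (forall p, List.In p l -> TcI phi g p.2) -> inLc phi g (lsum l).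
Proof.
move=> hl.
have hlT : forall p, List.In p l -> Tc p.2 by move=> p hp; exact: (hl p hp).1.
set f := lsum l.
have hf : forall xi, is_tight xi -> loc_const f xi by move=> xi; exact: loc_const_lsum.
pose K : tset S := fun xi => exists p, List.In p l /\ p.2 xi.
have hK : tcompact K by apply: tcompact_bigunion => p hp; exact: (hlT p hp).2.
have hKt : forall xi, K xi -> is_tight xi by move=> xi [p [hp hx]]; exact: (hlT p hp).1.1.
have hsupp : forall xi, f xi != 0 -> K xi.
  move=> xi hxi; apply: NNPP => hn; move: hxi; rewrite /f lsum_out ?eqxx //.
  by move=> p hp hpx; apply: hn; exists p.
set V := undup [seq v <- subsums (map fst l) | v != 0].
have hV : uniq V by apply: undup_uniq.
have hV0 : 0 \notin V by rewrite mem_undup mem_filter eqxx.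
exists [seq (v, level f v) | v <- V].
split; first by rewrite -map_comp map_id_in.
split.
  move=> p /List.in_map_iff [v [<- /In_mem hv]] /=.
  split; first by apply: contraNneq hV0 => <-.
  have hWK : forall xi, level f v xi -> K xi.
    by move=> xi [_ hfx]; apply: hsupp; rewrite hfx; apply: contraNneq hV0 => <-.
  split; first split.
  - exact: topen_level.
  - by apply: (closed_sub_tcompact hK hKt hWK); apply: closedT_level.
  - by move=> xi /hWK [q [hq hqx]]; exact: ((hl q hq).2 xi hqx).
split.
  move=> i j hij xi; rewrite size_map in hij.
  have hi : (i < size V)%N by case/andP: hij => /ltn_trans; apply.
  have hj : (j < size V)%N by case/andP: hij.
  rewrite (nth_map 0) // (nth_map 0) //=; exact: level_nth_disjoint.
have hfV : forall xi, f xi != 0 -> is_tight xi /\ f xi \in V.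
  move=> xi hxi; split; first exact/hKt/hsupp.
  by rewrite mem_undup mem_filter hxi lsum_subsums.
rewrite [LHS](sum_levels hV hV0 hfV); apply: functional_extensionality => xi.
by rewrite big_map.
Qed.

Lemma inLc_unpack t (f : Filt S -> R) : inLc phi t f ->
  exists l, (forall p, List.In p l -> TcI phi t p.2) /\ f = lsum l.
Proof.
move=> [l [_ [hl [_ ->]]]]; exists l; split => //.
by move=> p hp; case: (hl p hp).
Qed.

Lemma inLc_zero t (f : Filt S -> R) xi : inLc phi t f -> ~ Dg phi t xi -> f xi = 0.
Proof.
move=> /inLc_unpack [l [hl ->]] hn; apply: lsum_out => p hp hx.
by apply: hn; apply: (hl p hp).2.
Qed.

Lemma act_zero t (xi : Filt S) : act phi t (fun _ => 0 : R) xi = 0.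
Proof. by rewrite /act; case: excluded_middle_informative. Qed.

Definition Psi (a : G -> Filt S -> R) : germ S -> R := fun ga => a (grade ga) (rng ga).

Lemma Psi_Steinberg a : inL phi a -> inSteinberg (Psi a).
Proof.
move=> [[ts0 hts0] hLc].
have [ts [hnd hts]] := NoDup_exists ts0.
have key : forall ts : seq G, exists L : seq (R * (germ S -> Prop)),
    (forall p, List.In p L -> compact_open_bisection p.2) /\
    forall ga, \sum_(p <- L) p.1 * indic p.2 ga =
      \sum_(t <- ts) (if excluded_middle_informative (grade ga = t) then a t (rng ga) else 0).
  elim=> [|t ts' [L [hL hLs]]].
    by exists [::]; split => // ga; rewrite !big_nil.
  have [l [hl el]] := inLc_unpack (hLc t).
  exists ([seq (p.1, bisection_of t p.2) | p <- l] ++ L); split.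
    move=> p /List.in_app_iff [/List.in_map_iff [q [<- hq]]|hp]; last exact: hL.
    by apply: cob_bisection_of; exact: hl q hq.
  move=> ga; rewrite big_cat big_cons hLs big_map /=; congr (_ + _).
  case: excluded_middle_informative => [e|ne].
  - rewrite el /lsum; apply: eq_bigr => p _; congr (_ * _).
    by apply: indic_ext; split; [case | split].
  - by rewrite big1 // => p _; rewrite indic0 ?mulr0 // => [[]].
have [L [hL hLs]] := key ts.
exists L; split => //.
apply functional_extensionality => ga; rewrite hLs sum_pick_em //.
case: excluded_middle_informative => // hn.
rewrite /Psi hts0 //; by move=> /hts.
Qed.

Lemma Psi_inj a b : inL phi a -> inL phi b -> Psi a = Psi b -> a = b.
Proof.
move=> [_ ha] [_ hb] e.
apply functional_extensionality => t; apply functional_extensionality => xi.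
case: (classic (Dg phi t xi)) => hD.
- have [ga [hg hr]] := Dg_germ hD.
  have := congr1 (fun F => F ga) e; by rewrite /Psi hg hr.
- by rewrite (inLc_zero (ha t) hD) (inLc_zero (hb t) hD).
Qed.

Lemma Psi_surj f : inSteinberg f -> exists a, inL phi a /\ Psi a = f.
Proof.
move=> [l [hl ->]].
have [gs hgs] : exists gs : seq G, forall p ga, List.In p l -> p.2 ga -> List.In (grade ga) gs.
  elim: l hl => [|p l IH] hl; first by exists [::].
  have [gs1 h1] := IH (fun q hq => hl q (or_intror hq)).
  have [hpo [hpc _]] := hl p (or_introl erefl).
  have [gs2 h2] := finite_grades hpc hpo.
  exists (gs2 ++ gs1) => q ga [<-|hq] hx; apply/List.in_app_iff; [left; exact: h2 | right].
  exact: h1 q ga hq hx.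
pose a := fun t => lsum [seq (p.1, ranges t (fun ga => p.2 ga /\ grade ga = t)) | p <- l].
exists a; split; first split.
- exists gs => t ht; apply: functional_extensionality => xi.
  apply: lsum_out => p' /List.in_map_iff [p [<- hp]] /= [ga [[hx hg] _]].
  by apply: ht; rewrite -hg; apply: hgs hp hx.
- move=> t; apply: inLc_lsum => p' /List.in_map_iff [p [<- hp]] /=.
  have [hpo [hpc _]] := hl p hp.
  exact: TcI_ranges.
- apply: functional_extensionality => ga; rewrite /Psi /a /lsum big_map /=.
  apply: eq_bigr => p _; congr (_ * _); apply: indic_ext.
  have := bisection_of_ranges (grade ga) (fun ga' => p.2 ga' /\ grade ga' = grade ga) ga.
  rewrite /bisection_of => -[h1 h2]; split.
  + by move=> hx; have [[]] := h1 (conj erefl hx).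
  + by move=> hx; have [] := h2 (conj (conj hx erefl) erefl).
Qed.

Lemma Lmul_sum (a b : G -> Filt S -> R) (TS : seq G) u xi : List.NoDup TS ->
  (forall t, ~ List.In t TS -> a t = (fun _ => 0)) ->
  Lmul phi a b u xi =
  \sum_(t <- TS) act phi t (fun eta => act phi (inv t) (a t) eta * b (inv t *g u) eta) xi.
Proof.
move=> hnd ha0; rewrite /Lmul (fsumE (l := [seq (t, inv t *g u) | t <- TS])).
- rewrite big_map; apply: eq_bigr => t _ /=.
  by case: excluded_middle_informative => // [[]]; exact: gmulKr.
- by apply: NoDup_map_inj => // x y [].
- case=> t t' /=; case: excluded_middle_informative => // e hne.
  apply/List.in_map_iff; exists t; split; first by rewrite -e gmulKl.
  apply: NNPP => hn; apply: hne; rewrite ha0 //.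
  have -> : (fun eta => act phi (inv t) (fun _ => 0 : R) eta * b t' eta) = (fun _ => 0).
    by apply: functional_extensionality => eta; rewrite act_zero mul0r.
  exact: act_zero.
Qed.

Lemma Aconv_Psi_sum (a b : G -> Filt S -> R) (TS : seq G) ga : List.NoDup TS ->
  (forall t, ~ List.In t TS -> a t = (fun _ => 0)) ->
  Aconv (Psi a) (Psi b) ga =
  \sum_(t <- TS) (if factor ga t is Some q then Psi a q.1 * Psi b q.2 else 0).
Proof.
move=> hnd ha0; rewrite /Aconv (fsumE (l := pmap (factor ga) TS)).
- rewrite sum_pmap; apply: eq_bigr => t _.
  case E: (factor ga t) => [q|] //; have [hq _] := factorP E.
  by case: excluded_middle_informative.
- apply: NoDup_pmap => // x y q _ _ hx hy.
  by have [_ <-] := factorP hx; have [_ <-] := factorP hy.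
- move=> q; case: excluded_middle_informative => // hq hne; apply/In_pmap.
  exists (grade q.1); split; last exact: factor_gprod.
  by apply: NNPP => hn; apply: hne; rewrite /Psi ha0 // mul0r.
Qed.

Lemma act_Psi_factor (a b : G -> Filt S -> R) t ga :
  inLc phi (inv t *g grade ga) (b (inv t *g grade ga)) ->
  act phi t (fun eta => act phi (inv t) (a t) eta * b (inv t *g grade ga) eta) (rng ga) =
  if factor ga t is Some q then Psi a q.1 * Psi b q.2 else 0.
Proof.
move=> hb; rewrite /act; case: excluded_middle_informative => hD /=; last first.
  case E: (factor ga t) => [q|] //; have [hq eq1] := factorP E.
  by case: hD; have [<- _] := gprodP hq; rewrite -eq1; apply: rng_Dg.
have [al [hal1 hal2]] := Dg_germ hD.
have [th1 [th2 th3]] := theta_germ al; rewrite hal1 hal2 in th1 th2 th3.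
rewrite th1; case: excluded_middle_informative => // _ /=.
rewrite ginvK th3.
case E: (factor ga t) => [q|].
- have [hq eq1] := factorP E; have [r1 [s1 [_ g1]]] := gprodP hq.
  have eal : q.1 = al by apply: germ_inj_grade_rng; rewrite ?eq1 ?hal1 // r1 hal2.
  rewrite /Psi eq1 eal hal2 -s1 eal; congr (_ * _).
  by rewrite g1 eq1 gmulKl.
- have -> : b (inv t *g grade ga) (src al) = 0; last by rewrite mulr0.
  apply: NNPP => hne.
  have hD2 : Dg phi (inv t *g grade ga) (src al).
    by apply: NNPP => hn; apply: hne; apply: inLc_zero hb hn.
  have [be [hbe1 hbe2]] := Dg_germ hD2.
  have [ga' [hg' [hg2 hr2]]] := gprod_exists (esym hbe2).
  have ega : ga' = ga.
    by apply: germ_inj_grade_rng; rewrite ?hr2 ?hal2 // hg2 hal1 hbe1 gmulKr.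
  by apply: (factorN (q := (al, be)) E); rewrite /= -?ega.
Qed.

Lemma PsiM (a b : G -> Filt S -> R) : inL phi a -> inL phi b ->
  Psi (Lmul phi a b) = Aconv (Psi a) (Psi b).
Proof.
move=> [[ts0 hts0] _] [_ hb].
have [TS [hnd hTS]] := NoDup_exists ts0.
have ha0 : forall t, ~ List.In t TS -> a t = (fun _ => 0).
  by move=> t ht; apply: hts0 => /hTS.
apply: functional_extensionality => ga.
rewrite {1}/Psi (Lmul_sum b _ _ hnd ha0) (Aconv_Psi_sum b _ hnd ha0).
by apply: eq_bigr => t _; apply: act_Psi_factor.
Qed.
End Algebra.
End Grading.
End TightGroupoid.

Unset Implicit Arguments.

Theorem mainTheorem15 (S : invsemigroup) (G : group) (phi : S -> G)
    (R : comPzRingType) :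
  pure_grading phi ->
  exists Psi : (G -> Filt S -> R) -> (germ S -> R),
    (forall a, inL phi a -> inSteinberg (Psi a)) /\
    (forall a b, inL phi a -> inL phi b -> Psi a = Psi b -> a = b) /\
    (forall f, inSteinberg f -> exists a, inL phi a /\ Psi a = f) /\
    (forall a b, inL phi a -> inL phi b ->
       Psi (Ladd a b) = Aadd (Psi a) (Psi b)) /\
    (forall r a, inL phi a -> Psi (Lscale r a) = Ascale r (Psi a)) /\
    (forall a b, inL phi a -> inL phi b ->
       Psi (Lmul phi a b) = Aconv (Psi a) (Psi b)).
Proof.
move=> hphi; exists (@Psi S G phi R).
split; first by move=> a; exact: Psi_Steinberg.
split; first by move=> a b; exact: Psi_inj.
split; first by move=> f; exact: Psi_surj.
do 2!split => //.
by move=> a b; exact: PsiM.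
Qed.
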